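(* The Cutoff Price Mechanism described in the context is strategyproof: for each buyer with value $v$, it is a weakly dominant strategy to (i) in an inventory sale, accept the good if and only if $v$ is above the posted monopoly price; (ii) in a survival auction, drop out if and only if the clock price has reached $v$; and (iii) in an assignment auction, bid $v$.
   Context: Setting: goods arrive by a Poisson process (rate $\mu$) and unit-demand buyers by an independent Poisson process (rate $\lambda$), each with a private value $v\in[0,1]$; a buyer who obtains a good at price $P$ gets $v-P$ minus waiting costs, and waiting costs are reimbursed by the mechanism. Fix thresholds $\hat v_{-L^*}<\dots<\hat v_{-1}<\hat v_1<\dots<\hat v_{K^*}<1$, set $\hat v_k:=1$ for $k>K^*$ and $\hat v_0:=J^{-1}(0)$ where $J(v)=v-(1-F(v))/f(v)$. The buyer queue and goods inventory are never simultaneously nonempty. Cutoff Price Mechanism (CPM): each buyer $i$ has a personalized reserve $r_i$, initially $0$. (a) If a buyer arrives when $\ell\ge1$ goods are in inventory, the seller posts price $\hat v_{-\ell}$; the buyer buys or leaves. (b) A queued buyer is Active until his first assignment auction; after submitting bid $b$ there he becomes Passive and a Proxy Agent acts for him with fixed bid $b$: in later survival auctions it drops out (and the buyer is removed) when the clock exceeds $b$, and in later assignment auctions it bids $b$ (if the real buyer has left and the proxy later wins, the good is discarded). (c) If a buyer arrives when $k-1\ge0$ buyers are queued and no inventory, a survival auction starts with a common clock price rising from $\hat v_{k-1}$; active buyers decide continuously whether to stay; passive buyers' proxies drop out when the price exceeds their fixed bid; the auction ends when some buyer drops out or the price reaches $\hat v_k$; all remaining buyers stay and each survivor's reserve is updated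 to $r_i\leftarrow\max\{r_i,\text{stopped clock price}\}$. (d) If a good arrives and exactly one buyer is queued, he gets it and pays $r_i$. If several are queued, an assignment auction is held: each active buyer submits a sealed bid $b\ge r_i$, each passive buyer's proxy bids its fixed bid; the highest bidder wins (ties broken randomly) and pays his Cutoff Price, defined as the lowest bid $\mathcal B\ge r_i$ such that, had he adopted $\mathcal B$ as his fixed bid (represented by a proxy with bid $\mathcal B$ in all subsequent events), he would eventually win a good on the realized sample path of future arrivals; payment is collected once this is determined. (e) Buyers are reimbursed realized waiting costs. (f) Buyers' identities and bids are private, and buyers observe neither the queue nor its length. Weak dominance is with respect to all strategies of other buyers and all realizations of arrivals. *)

From HB Require Import structures.
From mathcomp Require Import all_boot all_order all_algebra.
From mathcomp Require Import boolp classical_sets reals.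

Set Implicit Arguments.
Unset Strict Implicit.
Unset Printing Implicit Defensive.

Import Order.TTheory GRing.Theory Num.Theory.
Local Open Scope ring_scope.

(* Deterministic, pathwise model of the Cutoff Price Mechanism (CPM).         *)
(* A realization of the arrival processes is a sequence of events [ev n]      *)
(* (a good, or a buyer with private value v) occurring at times [tm n];       *)
(* buyer "i" is identified with the index i of his arrival event.  The        *)
(* realization also fixes the random tie-breaking: in the assignment auction  *)
(* held at event n, ties in the highest bid are broken in favour of the       *)
(* buyer j with the largest priority [tb n j].                                *)

Section CPM.
Variable R : realType.

Inductive event := Good | Buyer of R.

(* What a buyer observes (his private history).  Buyers observe neither the  *)
(* queue nor its length, nor the identities / bids of others.                *)
Inductive obs :=
  | OArr of R            (* own arrival time *)
  | OSurv of R & R & R   (* survived a survival auction: time, start clock, stop clock *)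
  | OLost of R & R & R.  (* lost own first assignment auction: time, own bid, own reserve *)

(* - [accept h p]    : inventory sale at posted price p: buy or leave;        *)
(* - [drop_at h t s] : in a survival auction at time t whose clock starts at  *)
(*                     s, the clock price at which he drops out (the only     *)
(*                     thing he observes during the auction is the rising     *)
(*                     clock, so a continuous stopping decision is a price);  *)
(* - [bid h t]       : sealed bid in his first assignment auction at time t;  *)
(* - [leave h]       : after becoming passive (having lost his first          *)
(*                     assignment auction), the time at which the real buyer  *)
(*                     leaves (None = never); his proxy keeps acting.          *)
Record strategy := Strategy {
  accept : seq obs -> R -> bool;
  drop_at : seq obs -> R -> R -> R;
  bid : seq obs -> R -> R;
  leave : seq obs -> option R }.

Definition truthful (v : R) : strategy :=
  Strategy (fun _ p => p < v) (fun _ _ _ => v) (fun _ _ => v) (fun _ => None).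

Inductive status :=
  | Active
  | Passive of R & option R.  (* proxy's fixed bid, departure time of the real buyer *)

Record entry := Entry { eid : nat; eres : R; estat : status; ehist : seq obs }.

Record state := State { sinv : nat; squeue : seq entry }.

Inductive result :=
  | RBuy of R              (* bought from inventory at this price *)
  | RGood of R & bool      (* sole queued buyer got a good: price r_i, real buyer present? *)
  | RWin of R & bool.      (* won an assignment auction: reserve r_i, real buyer present? *)

Definition vhat (th : int -> R) (K : nat) (v0 : R) (k : int) : R :=
  if k == 0 then v0 else if (K%:Z < k)%R then 1 else th k.

Variables (vh : int -> R) (L : nat) (ev : nat -> event) (tm : nat -> R)
          (tb : nat -> nat -> nat) (sig : nat -> strategy).

(* Lexicographic order on drop points (x, b): b = true means "just after x" *)
(* (a proxy with bid x drops when the clock EXCEEDS x).                      *)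
Definition ltp (a b : R * bool) : bool :=
  (a.1 < b.1) || ((a.1 == b.1) && (~~ a.2 && b.2)).
Definition minp (a b : R * bool) : R * bool := if ltp b a then b else a.

Section Step.
(* [ov = Some (j, B)]: buyer j is represented by a proxy with fixed bid B *)
(* (used for the counterfactual defining the Cutoff Price).               *)
Variable ov : option (nat * R).

Definition eff_stat (e : entry) : status :=
  match ov with
  | Some (j, B) => if eid e == j then Passive B None else estat e
  | None => estat e
  end.

Definition present (e : entry) (t : R) : bool :=
  match eff_stat e with
  | Passive _ (Some d) => t < d
  | _ => true
  end.

Definition step (st : state) (n : nat) : state * seq (nat * result) :=
  let q := squeue st in
  let t := tm n in
  match ev n with
  | Buyer _ =>
    let l := sinv st in
    if (0 < l)%N then
      let p := vh (- (l%:Z)) in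
      if accept (sig n) [:: OArr t] p then (State l.-1 q, [:: (n, RBuy p)])
      else (st, [::])
    else
      let q' := rcons q (Entry n 0 Active [:: OArr t]) in
      let k := (size q).+1 in
      let s := vh (k.-1)%:Z in
      let cap := vh k%:Z in
      let point e :=
        match eff_stat e with
        | Active => (Num.max s (drop_at (sig (eid e)) (ehist e) t s), false)
        | Passive b _ => if b < s then (s, false) else (b, true)
        end in
      let endp := foldr minp (Num.max s cap, false) (map point q') in
      let pstar := endp.1 in
      let surv := [seq e <- q' | ltp endp (point e)] in
      let upd e := Entry (eid e) (Num.max (eres e) pstar) (estat e)
                         (rcons (ehist e) (OSurv t s pstar)) in
      (State 0 (map upd surv), [::])
  | Good =>
    match q with
    | [::] => (State (minn (sinv st).+1 L) [::], [::])   (* goods beyond L are discarded *)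
    | [:: e] => (State (sinv st) [::], [:: (eid e, RGood (eres e) (present e t))])
    | e0 :: q1 =>
      let bidof e :=
        match eff_stat e with
        | Active => Num.max (eres e) (bid (sig (eid e)) (ehist e) t)
        | Passive b _ => b
        end in
      let better e w :=
        (bidof w < bidof e) ||
        ((bidof w == bidof e) && (tb n (eid w) < tb n (eid e))%N) in
      let w := foldl (fun w e => if better e w then e else w) e0 q1 in
      let losers := [seq e <- q | eid e != eid w] in
      let upd e :=
        match estat e with
        | Active =>
          let b := bidof e in
          let h := rcons (ehist e) (OLost t b (eres e)) in
          Entry (eid e) (eres e) (Passive b (leave (sig (eid e)) h)) h
        | Passive _ _ => e
        end in
      (State (sinv st) (map upd losers), [:: (eid w, RWin (eres w) (present w t))])
    end
  end.
End Step.

(* state before event n, along the actual play *)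
Fixpoint run (n : nat) : state :=
  if n is m.+1 then (step None (run m) m).1 else State 0 [::].

Definition outcome (n i : nat) : option result :=
  ohead [seq x.2 | x <- (step None (run n) n).2 & x.1 == i].

(* counterfactual: from event k on, buyer j is a proxy with fixed bid B;    *)
(* [run_cf k j B m] is the state before event k + m.                        *)
Fixpoint run_cf (k j : nat) (B : R) (m : nat) : state :=
  if m is m'.+1 then (step (Some (j, B)) (run_cf k j B m') (k + m')).1 else run k.

Definition wins_cf (k j : nat) (B : R) : Prop :=
  exists m, has (fun x => x.1 == j)
                (step (Some (j, B)) (run_cf k j B m) (k + m)).2.

(* Cutoff Price of buyer j winning the assignment auction at event k with    *)
(* reserve r: the lowest bid B >= r with which he would eventually win.      *)
Definition cutoff (k j : nat) (r : R) : R :=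
  inf [set B | r <= B /\ wins_cf k j B].

(* Realized utility of buyer i of value v (waiting costs are reimbursed). *)
Definition payoff (i : nat) (v : R) : R :=
  match pselect (exists n, isSome (outcome n i)) with
  | left h =>
    let n := ex_minn h in
    match outcome n i with
    | Some (RBuy p) => v - p
    | Some (RGood p pres) => if pres then v - p else 0
    | Some (RWin r pres) => if pres then v - cutoff n i r else 0
    | None => 0
    end
  | right _ => 0
  end.

End CPM.

Definition upd_strat (R : realType) (sig : nat -> strategy R) (i : nat)
  (s : strategy R) : nat -> strategy R :=
  fun j => if j == i then s else sig j.

(* Fix the realized arrivals, tie-breaks and the other buyers' strategies, and
   compare buyer i's truthful play with an arbitrary deviation.  Until i's first
   assignment auction both plays produce the same queue: a posted price is
   accepted exactly when it is below v, and in a survival auction dropping out at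
   v only forgoes goods whose reserve would exceed v.  From then on i behaves like
   a bidder with a fixed bid, and raising a fixed bid can only get i served
   earlier (two plays differing only in i's bid stay coupled until the higher
   bid is served).  Hence every bid C with which the deviation would still win is
   a winning fixed bid for the truthful buyer at his first auction, where he pays
   at most C; taking the infimum, the deviation's Cutoff Price is at least v
   minus the truthful payoff. *)

From HB Require Import structures.
From mathcomp Require Import all_boot all_order all_algebra.
From mathcomp Require Import boolp classical_sets reals.
From Stdlib Require List.
Import Order.TTheory GRing.Theory Num.Theory.
Local Open Scope ring_scope.

Set Implicit Arguments.
Unset Strict Implicit.
Unset Printing Implicit Defensive.

(** * Pointwise related lists and their folds *)

Section Lists.
Context {X Y : Type}.

Lemma Forall2_size (rel : X -> Y -> Prop) q1 q2 :
  List.Forall2 rel q1 q2 -> size q1 = size q2.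
Proof. by elim=> //= ? ? ? ? _ _ ->. Qed.

Lemma Forall2_filter (rel : X -> Y -> Prop) (p1 : pred X) (p2 : pred Y) q1 q2 :
  (forall a b, rel a b -> p1 a = p2 b) -> List.Forall2 rel q1 q2 ->
  List.Forall2 rel (filter p1 q1) (filter p2 q2).
Proof.
move=> p12; elim=> //= a b {}q1 {}q2 ab _ IH.
by rewrite (p12 _ _ ab); case: (p2 b) => //; constructor.
Qed.

Lemma Forall2_map X' Y' (rel : X -> Y -> Prop) (rel' : X' -> Y' -> Prop)
    (g1 : X -> X') (g2 : Y -> Y') q1 q2 :
  (forall a b, rel a b -> rel' (g1 a) (g2 b)) -> List.Forall2 rel q1 q2 ->
  List.Forall2 rel' (map g1 q1) (map g2 q2).
Proof. by move=> g12; elim=> //= a b {}q1 {}q2 /g12 ab _; constructor. Qed.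

Lemma Forall2_rcons (rel : X -> Y -> Prop) q1 q2 a b :
  List.Forall2 rel q1 q2 -> rel a b -> List.Forall2 rel (rcons q1 a) (rcons q2 b).
Proof. by move=> q12 ab; elim: q12 => /= [|? ? ? ? ? _]; constructor. Qed.

Lemma Forall2_In_l (rel : X -> Y -> Prop) q1 q2 a :
  List.Forall2 rel q1 q2 -> List.In a q1 -> exists2 b, List.In b q2 & rel a b.
Proof.
elim=> //= x y {}q1 {}q2 xy _ IH [<-|/IH[b qb ab]]; first by exists y; [left|].
by exists b; [right|].
Qed.

Lemma Forall2_In_r (rel : X -> Y -> Prop) q1 q2 b :
  List.Forall2 rel q1 q2 -> List.In b q2 -> exists2 a, List.In a q1 & rel a b.
Proof.
elim=> //= x y {}q1 {}q2 xy _ IH [<-|/IH[a qa ab]]; first by exists x; [left|].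
by exists a; [right|].
Qed.

Lemma Forall2_self (rel : X -> X -> Prop) q : (forall a, rel a a) -> List.Forall2 rel q q.
Proof. by move=> r; elim: q => [|a q IH]; constructor. Qed.

Lemma Forall2_in_impl (rel rel' : X -> Y -> Prop) q1 q2 :
  (forall a b, List.In a q1 -> List.In b q2 -> rel a b -> rel' a b) ->
  List.Forall2 rel q1 q2 -> List.Forall2 rel' q1 q2.
Proof.
move=> h q12; elim: q12 h => // a b {}q1 {}q2 ab _ IH h.
constructor; first by apply: h => //; left.
by apply: IH => x y qx qy; apply: h; right.
Qed.

Lemma In_rcons {a b : X} {q} : List.In a (rcons q b) -> List.In a q \/ a = b.
Proof.
elim: q => [|x q IH] /=; first by case=> [->|[]]; right.
by case=> [->|/IH[]]; [left; left | left; right | right].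
Qed.

Lemma In_rcons_l (a b : X) q : List.In a q -> List.In a (rcons q b).
Proof. by elim: q => [|x q IH] //= [->|/IH]; [left | right]. Qed.

Lemma In_rcons_r (b : X) q : List.In b (rcons q b).
Proof. by elim: q => [|x q IH] /=; [left | right]. Qed.

Lemma In_filter {p : pred X} {a q} : List.In a (filter p q) -> List.In a q /\ p a.
Proof.
elim: q => [|x q IH] //=; case: ifP => px /=; last by move/IH=> [? ?]; split; [right|].
by case=> [<-|/IH[? ?]]; split=> //; [left | right].
Qed.

Lemma In_filter_intro (p : pred X) a q : List.In a q -> p a -> List.In a (filter p q).
Proof.
elim: q => [|x q IH] //= [<-|qa] pa; first by rewrite pa; left.
by case: ifP => _; [right|]; apply: IH.
Qed.

Lemma In_map {g : X -> Y} {b q} : List.In b (map g q) -> exists2 a, List.In a q & b = g a.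
Proof.
by elim: q => [|x q IH] //= [<-|/IH[a qa ->]]; [exists x; [left|] | exists a; [right|]].
Qed.

Lemma In_map_f (g : X -> Y) a q : List.In a q -> List.In (g a) (map g q).
Proof. by elim: q => [|x q IH] //= [->|/IH]; [left | right]. Qed.

Lemma eq_In_map (g1 g2 : X -> Y) q :
  (forall x, List.In x q -> g1 x = g2 x) -> map g1 q = map g2 q.
Proof.
elim: q => [|x q IH] //= h; rewrite h; last by left.
by rewrite IH // => y qy; apply: h; right.
Qed.

Lemma eq_In_filter (p1 p2 : pred X) q :
  (forall x, List.In x q -> p1 x = p2 x) -> filter p1 q = filter p2 q.
Proof.
elim: q => [|x q IH] //= h; rewrite h; last by left.
by rewrite IH // => y qy; apply: h; right.
Qed.

End Lists.

Section FoldMin.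
Context {d : Order.disp_t} {T : orderType d} {X : Type}.
Implicit Types (m P : T) (q : seq X).

Lemma foldr_min_ge m init (f : X -> T) q :
  (m <= init)%O -> (forall x, List.In x q -> m <= f x)%O ->
  (m <= foldr Order.min init (map f q))%O.
Proof.
move=> m_init; elim: q => [|x q IH] //= mq.
by rewrite le_min mq /=; [apply: IH => y qy; apply: mq; right | left].
Qed.

Variables (special : pred X) (f1 f2 : X -> T) (P1 P2 : T).
Hypothesis P12 : (P1 <= P2)%O.

Lemma foldr_min_raise (rel : X -> X -> Prop) init q1 q2 :
  List.Forall2 rel q1 q2 ->
  (forall a b, rel a b -> special a -> f1 a = P1 /\ f2 b = P2) ->
  (forall a b, rel a b -> ~~ special a -> f1 a = f2 b) ->
  let m1 := foldr Order.min init (map f1 q1) in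
  let m2 := foldr Order.min init (map f2 q2) in
  m1 = m2 \/ m1 = P1 /\ (P1 <= m2)%O.
Proof.
move=> q12 hsp hns; elim: q12 => [|a b {}q1 {}q2 ab _ IH] /=; first by left.
set m1 := foldr _ _ (map f1 q1) in IH *; set m2 := foldr _ _ (map f2 q2) in IH *.
have [sa|nsa] := boolP (special a).
- have [-> ->] := hsp a b ab sa.
  case: IH => [<-|[-> P1m2]]; last by right; rewrite minxx le_min P12.
  have [m1P1|P1m1] := ltP m1 P1.
  + by left; rewrite min_r // ltW // (lt_le_trans m1P1).
  + by right; rewrite le_min P12.
- rewrite (hns a b ab nsa); set x := f2 b.
  case: IH => [<-|[-> P1m2]]; first by left.
  have [xP1|P1x] := ltP x P1.
  + by left; rewrite min_l // ltW // (lt_le_trans xP1).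
  + by right; rewrite le_min P1x.
Qed.

End FoldMin.

Section FoldArgmax.
Context {d : Order.disp_t} {T : orderType d} {X : Type}.

Definition argmax (k : X -> T) (x0 : X) (q : seq X) : X :=
  foldl (fun w e => if (k w < k e)%O then e else w) x0 q.

Lemma argmax_in k x0 q : List.In (argmax k x0 q) (x0 :: q).
Proof.
elim: q x0 => [|x q IH] x0 /=; first by left.
case: ifP => _; first by right; apply: IH.
by case: (IH x0) => h; [left | right; right].
Qed.

Lemma eq_in_argmax (k1 k2 : X -> T) x0 q :
  (forall x, List.In x (x0 :: q) -> k1 x = k2 x) -> argmax k1 x0 q = argmax k2 x0 q.
Proof.
rewrite /argmax; elim: q x0 => [|x q IH] x0 //= k12.
rewrite !k12 /=; [|by right; left|by left]; apply: IH => y /= [<-|qy].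
  by case: ifP => _; apply: k12; [right; left | left].
by apply: k12; right; right.
Qed.

Variables (special : pred X) (k1 k2 : X -> T) (c1 c2 : T) (rel : X -> X -> Prop).
Hypotheses (c12 : (c1 <= c2)%O)
  (rel_special : forall a b, rel a b -> special a = special b)
  (rel_key : forall a b, rel a b -> special a -> k1 a = c1 /\ k2 b = c2)
  (rel_other : forall a b, rel a b -> ~~ special a -> a = b /\ k1 a = k2 a).

(* The invariant of the two folds run side by side in [argmax_raise]. *)
Definition alike w1 w2 := [/\ special w1 = special w2,
  special w1 -> k1 w1 = c1 /\ k2 w2 = c2 & ~~ special w1 -> w1 = w2 /\ k1 w1 = k2 w1].

Definition overtaken w1 w2 :=
  [/\ special w2, k2 w2 = c2, ~~ special w1, k1 w1 = k2 w1 & (k2 w1 <= c2)%O].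

Local Notation next k w e := (if (k w < k e)%O then e else w).

Lemma alike_rel a b : rel a b -> alike a b.
Proof.
move=> ab; split; [exact: rel_special ab | exact: rel_key ab | exact: rel_other ab].
Qed.

Lemma alike_other a : ~~ special a -> k1 a = k2 a -> alike a a.
Proof. by move=> na ka; split=> // sa; rewrite sa in na. Qed.

Lemma alike_next w1 w2 a b : alike w1 w2 -> rel a b ->
  alike (next k1 w1 a) (next k2 w2 b) \/ overtaken (next k1 w1 a) (next k2 w2 b).
Proof.
move=> [sw kw ow] ab; have sab := rel_special ab.
have [sa|na] := boolP (special a); have [sw1|nw1] := boolP (special w1).
- have [-> ->] := rel_key ab sa; have [-> ->] := kw sw1.
  by rewrite !ltxx; left.
- have [<- kw1] := ow nw1; have [ka kb] := rel_key ab sa; rewrite ka kb -kw1.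
  have [lt1|_] := boolP (k1 w1 < c1)%O.
    by rewrite (lt_le_trans lt1 c12); left; apply: alike_rel.
  have [lt2|_] := boolP (k1 w1 < c2)%O; last by left; apply: alike_other.
  by right; split; rewrite -?sab // -kw1 ltW.
- have [<- ka] := rel_other ab na; have [kw1 kw2] := kw sw1; rewrite kw1 kw2 -ka.
  have [lt2|nlt2] := boolP (c2 < k1 a)%O.
    by rewrite (le_lt_trans c12 lt2); left; apply: alike_other.
  have [_|_] := boolP (c1 < k1 a)%O; last by left.
  by right; split; rewrite -?sw // -ka leNgt.
- have [<- kw1] := ow nw1; have [<- ka] := rel_other ab na.
  by rewrite -kw1 -ka; case: ifP => _; left; apply: alike_other.
Qed.

Lemma overtaken_next w1 w2 a b : overtaken w1 w2 -> rel a b ->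
  alike (next k1 w1 a) (next k2 w2 b) \/ overtaken (next k1 w1 a) (next k2 w2 b).
Proof.
move=> [sw2 kw2 nw1 kw1 le1] ab.
have [sa|na] := boolP (special a).
- have [ka kb] := rel_key ab sa; rewrite ka kb kw2 ltxx.
  by case: ifP => _; [left; split; rewrite ?sa | right].
- have [<- ka] := rel_other ab na; rewrite kw2 -ka.
  have [lt2|nlt2] := boolP (c2 < k1 a)%O.
    by rewrite kw1 (le_lt_trans le1 lt2); left; apply: alike_other.
  by case: ifP => _; right; split; rewrite // -ka leNgt.
Qed.

Lemma argmax_raise x1 x2 q1 q2 : List.Forall2 rel (x1 :: q1) (x2 :: q2) ->
  let w1 := argmax k1 x1 q1 in let w2 := argmax k2 x2 q2 in
  special w1 = special w2 /\ (~~ special w1 -> w1 = w2) \/ special w2 /\ ~~ special w1.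
Proof.
move=> /List.Forall2_cons_iff[x12 q12] /=.
suff : alike (argmax k1 x1 q1) (argmax k2 x2 q2) \/
       overtaken (argmax k1 x1 q1) (argmax k2 x2 q2).
  by case=> [[sw _ ow]|[sw2 _ nw1 _ _]]; [left; split=> // /ow[] | right].
have : alike x1 x2 \/ overtaken x1 x2 by left; apply: alike_rel.
rewrite /argmax; clear x12; elim: q12 x1 x2 => // a b {}q1 {}q2 ab _ IH w1 w2 J.
by apply: IH; case: J => [/alike_next|/overtaken_next]; apply.
Qed.

End FoldArgmax.

Lemma subr_le_of_gt (F : numFieldType) (x y w : F) :
  (forall B, x < B -> w - B <= y) -> w - x <= y.
Proof.
move=> h; apply/ler_addgt0Pr => e e0; have := h (x + e); rewrite ltrDl => /(_ e0).
by rewrite opprD addrA lerBlDr.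
Qed.

(** * The drop points of survival auctions *)

(* Drop points of a survival auction: (p, false) leaves when the clock reaches p,
   (p, true) just after it exceeds p; [ltp] of the model is the lexicographic
   order on them (see [ltpE]). *)
Notation "a <d b" := (@Order.lt _ (_ *l bool)%type a b) (at level 70).
Notation "a <=d b" := (@Order.le _ (_ *l bool)%type a b) (at level 70).

Section DropPoints.
Variable R : realType.
Implicit Types (x y s B : R) (a b E : R * bool).

Lemma ltpE : @ltp R = fun a b => a <d b.
Proof.
apply/funext=> -[x p]; apply/funext=> -[y q]; rewrite /ltp ltxi_pair /=.
by case: (ltgtP x y) => //=; case: p; case: q.
Qed.

Lemma minpE : @minp R = fun a b => @Order.min _ (R *l bool)%type a b.
Proof.
apply/funext=> a; apply/funext=> b; rewrite /minp ltpE /Order.min.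
by case: (@ltgtP _ (R *l bool)%type a b).
Qed.

Lemma drop_le_fst a b : a <=d b -> a.1 <= b.1.
Proof. by rewrite leEprodlexi => /andP[]. Qed.

Lemma drop_lt_fst a b : a <d b -> a.1 <= b.1.
Proof. by move/ltW/drop_le_fst. Qed.

Lemma drop_start_le s c : (s, false) <=d (Num.max s c, false).
Proof. by rewrite lexi_pair /= le_max lexx implybT. Qed.

Lemma drop_lt_max s x E : (s, false) <=d E -> E <d (Num.max s x, false) -> E.1 < x.
Proof.
case: E => e p; rewrite lexi_pair ltxi_pair /= => /andP[se _] /andP[_].
have -> : (p < false)%O = false by case: p.
rewrite implybF -ltNge lt_max => /orP[es|//].
by have := le_lt_trans se es; rewrite ltxx.
Qed.

Definition proxy_point B s : R * bool := if B < s then (s, false) else (B, true).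

Lemma proxy_point_mono s B1 B2 : B1 <= B2 -> proxy_point B1 s <=d proxy_point B2 s.
Proof.
rewrite /proxy_point => B12; case: ifP => h1; case: ifP => h2.
- exact: lexx.
- by rewrite lexi_pair /= (leNgt s B2) h2 implybT.
- by move: (le_lt_trans B12 h2); rewrite h1.
- by rewrite lexi_pair /= B12 implybT.
Qed.

Lemma proxy_point_lt s B1 B2 : proxy_point B1 s <d proxy_point B2 s -> B1 < B2.
Proof.
by rewrite ltNge => h; rewrite ltNge; apply: contra h => /(proxy_point_mono s).
Qed.

Lemma le_proxy_point B s : B <= (proxy_point B s).1.
Proof. by rewrite /proxy_point; case: ifP => //= /ltW. Qed.

Lemma start_le_proxy_point B s : (s, false) <=d proxy_point B s.
Proof.
rewrite /proxy_point; case: ifP => h; first exact: lexx.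
by rewrite lexi_pair /= (leNgt s B) h implybT.
Qed.

Lemma lt_proxy_point s B E :
  (s, false) <=d E -> E <d proxy_point B s -> s <= B /\ E.1 <= B.
Proof.
rewrite /proxy_point; case: ifP => [_ sE /(le_lt_trans sE)|h _ /drop_lt_fst EB].
  by rewrite ltxx.
by rewrite (leNgt s B) h.
Qed.

End DropPoints.

(** * One event of the mechanism *)

Section Play.
Variables (R : realType) (vh : int -> R) (L : nat) (ev : nat -> event R)
  (tm : nat -> R) (tb : nat -> nat -> nat) (i : nat).

Local Notation entry := (entry R).
Local Notation state := (state R).
Local Notation strategy := (strategy R).
Local Notation step := (step vh L ev tm tb).
Local Notation run := (run vh L ev tm tb).
Local Notation wins_cf := (wins_cf vh L ev tm tb).
Local Notation cutoff := (cutoff vh L ev tm tb).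
Local Notation payoff := (payoff vh L ev tm tb).
Local Notation outcome := (outcome vh L ev tm tb).
Local Notation dmin := (@Order.min _ (R *l bool)%type).

Implicit Types (sg : nat -> strategy) (ov : option (nat * R)) (st : state) (e : entry).

Definition bidof sg ov n e : R :=
  match eff_stat ov e with
  | Active => Num.max (eres e) (bid (sg (eid e)) (ehist e) (tm n))
  | Passive b _ => b
  end.

(* [winner] is verbatim the fold computed by [step], so that [step] unfolds by
   conversion; [winnerE] recasts it as the argmax of (bid, tie-break priority). *)
Definition better sg ov n e w : bool :=
  (bidof sg ov n w < bidof sg ov n e) ||
  ((bidof sg ov n w == bidof sg ov n e) && (tb n (eid w) < tb n (eid e))%N).

Definition winner sg ov n e0 q :=
  foldl (fun w e => if better sg ov n e w then e else w) e0 q.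

Arguments winner : simpl never.

Definition key sg ov n e : R *l nat := (bidof sg ov n e, tb n (eid e)).

Lemma winnerE sg ov n e0 q : winner sg ov n e0 q = argmax (key sg ov n) e0 q.
Proof.
congr foldl; apply/funext=> w; apply/funext=> e; congr (if _ then _ else _).
rewrite /better ltxi_pair /=.
by case: ltgtP => //= _; rewrite ?ltnNge; case: leqP.
Qed.

Definition mark_loser sg ov n e : entry :=
  match estat e with
  | Active =>
    let b := bidof sg ov n e in
    let h := rcons (ehist e) (OLost (tm n) b (eres e)) in
    Entry (eid e) (eres e) (Passive b (leave (sg (eid e)) h)) h
  | Passive _ _ => e
  end.

Definition point sg ov n s e : R * bool :=
  match eff_stat ov e with
  | Active => (Num.max s (drop_at (sg (eid e)) (ehist e) (tm n) s), false)
  | Passive b _ => proxy_point b s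
  end.

Definition survivor n s p e : entry :=
  Entry (eid e) (Num.max (eres e) p) (estat e) (rcons (ehist e) (OSurv (tm n) s p)).

Definition arrival n : entry := Entry n 0 (Active R) [:: OArr (tm n)].

Lemma step_sale sg ov st n w : ev n = Buyer w -> (0 < sinv st)%N ->
  step sg ov st n =
  let p := vh (- (sinv st)%:Z) in
  if accept (sg n) [:: OArr (tm n)] p
  then (State (sinv st).-1 (squeue st), [:: (n, RBuy p)]) else (st, [::]).
Proof. by rewrite /step => -> ->. Qed.

Lemma step_survival sg ov st n w : ev n = Buyer w -> sinv st = 0%N ->
  let q := rcons (squeue st) (arrival n) in
  let s := vh (size (squeue st))%:Z in
  let E := foldr dmin (Num.max s (vh (size (squeue st)).+1%:Z), false)
                 (map (point sg ov n s) q) in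
  step sg ov st n =
  (State 0 (map (survivor n s E.1) [seq e <- q | E <d point sg ov n s e]), [::]).
Proof. by rewrite /step ltpE minpE => -> ->. Qed.

Lemma step_good_empty sg ov st n : ev n = Good R -> squeue st = [::] ->
  step sg ov st n = (State (minn (sinv st).+1 L) [::], [::]).
Proof. by rewrite /step => -> ->. Qed.

Lemma step_good_sole sg ov st n e : ev n = Good R -> squeue st = [:: e] ->
  step sg ov st n =
  (State (sinv st) [::], [:: (eid e, RGood (eres e) (present ov e (tm n)))]).
Proof. by rewrite /step => -> ->. Qed.

Lemma step_auction sg ov st n e0 e1 q : ev n = Good R -> squeue st = e0 :: e1 :: q ->
  let w := winner sg ov n e0 (e1 :: q) in
  step sg ov st n =
  (State (sinv st) (map (mark_loser sg ov n) [seq e <- e0 :: e1 :: q | eid e != eid w]),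
   [:: (eid w, RWin (eres w) (present ov w (tm n)))]).
Proof. by rewrite /step => -> ->. Qed.

Lemma eid_mark_loser sg ov n e : eid (mark_loser sg ov n e) = eid e.
Proof. by rewrite /mark_loser; case: (estat e). Qed.

Lemma eres_mark_loser sg ov n e : eres (mark_loser sg ov n e) = eres e.
Proof. by rewrite /mark_loser; case: (estat e). Qed.

Lemma start_le_point sg ov n s e : (s, false) <=d point sg ov n s e.
Proof.
rewrite /point; case: (eff_stat ov e) => [|b d]; first exact: drop_start_le.
exact: start_le_proxy_point.
Qed.

Lemma start_le_survival_end sg ov n s c q :
  (s, false) <=d foldr dmin (Num.max s c, false) (map (point sg ov n s) q).
Proof. by apply: foldr_min_ge => [|x _]; [exact: drop_start_le | exact: start_le_point]. Qed.

Fixpoint run_from sg ov st k m : state :=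
  if m is m'.+1 then (step sg ov (run_from sg ov st k m') (k + m')).1 else st.

Definition out_from sg ov st k m := (step sg ov (run_from sg ov st k m) (k + m)).2.

Lemma run_from_add sg ov st k m1 m2 :
  run_from sg ov st k (m1 + m2) = run_from sg ov (run_from sg ov st k m1) (k + m1) m2.
Proof. by elim: m2 => [|m IH]; rewrite ?addn0 // addnS /= IH addnA. Qed.

Lemma out_from_add sg ov st k m1 m2 :
  out_from sg ov st k (m1 + m2) = out_from sg ov (run_from sg ov st k m1) (k + m1) m2.
Proof. by rewrite /out_from run_from_add addnA. Qed.

Lemma run_from_run sg k m : run_from sg None (run sg k) k m = run sg (k + m).
Proof. by elim: m => [|m IH]; rewrite ?addn0 // addnS /= IH. Qed.

Lemma out_from_run sg k m :
  out_from sg None (run sg k) k m = (step sg None (run sg (k + m)) (k + m)).2.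
Proof. by rewrite /out_from run_from_run. Qed.

Lemma wins_cfE sg k B : wins_cf sg k i B <->
  exists m, i \in unzip1 (out_from sg (Some (i, B)) (run sg k) k m).
Proof.
have cfE m : run_cf vh L ev tm tb sg k i B m = run_from sg (Some (i, B)) (run sg k) k m.
  by elim: m => [|m IH] //=; rewrite IH.
by split=> -[m h]; exists m; move: h; rewrite /out_from -cfE -has_pred1 has_map.
Qed.

(** * Invariants of a single play *)

Definition absent st := forall e, List.In e (squeue st) -> eid e <> i.

Lemma absent_step sg ov st n : n <> i -> absent st ->
  absent (step sg ov st n).1 /\ i \notin unzip1 (step sg ov st n).2.
Proof.
move=> ni ab; case E: (ev n) => [|w].
- case Q: (squeue st) => [|a [|a' q]].
  + by rewrite (step_good_empty _ _ E Q); split=> // ? [].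
  + rewrite (step_good_sole _ _ E Q) /= inE; split=> [? []|].
    by rewrite eq_sym; apply/eqP; apply: ab; rewrite Q; left.
  + rewrite (step_auction _ _ E Q); split.
      by move=> e /In_map [x /In_filter [qx _] ->]; rewrite eid_mark_loser; apply: ab; rewrite Q.
    by rewrite /= inE eq_sym; apply/eqP; apply: ab; rewrite Q winnerE; apply: argmax_in.
- case: (posnP (sinv st)) => [z|p].
  + rewrite (step_survival _ _ E z) /=; split=> // e /In_map [x /In_filter [+ _] ->] /=.
    by case/In_rcons=> [|->] //; apply: ab.
  + rewrite (step_sale _ _ E p) /=; case: ifP => _ //=.
    by rewrite inE eq_sym; split=> //; apply/eqP.
Qed.

Lemma absent_run_from sg ov st k m : (i < k)%N -> absent st ->
  absent (run_from sg ov st k m) /\ i \notin unzip1 (out_from sg ov st k m).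
Proof.
move=> ik ab; have ne m' : (k + m')%N <> i.
  by move=> e; move: ik; rewrite -e ltnNge leq_addr.
suff abm m' : absent (run_from sg ov st k m').
  by split=> //; have [] := absent_step sg ov (ne m) (abm m).
by elim: m' => [|m' IH] //=; have [] := absent_step sg ov (ne m') IH.
Qed.

Lemma run_absent sg n : (n <= i)%N -> absent (run sg n).
Proof.
elim: n => [|n IH] ni; first by move=> e [].
have ne : n <> i by move=> e; move: ni; rewrite e ltnn.
by have [] := absent_step sg None ne (IH (ltnW ni)).
Qed.

Definition count_i q := count (fun e => eid e == i) q.

Lemma step_count_i sg ov st n :
  (count_i (squeue (step sg ov st n).1) <= count_i (squeue st) + (n == i))%N.
Proof.
have count_sub (p : pred entry) q : (count_i (filter p q) <= count_i q)%N.
  by rewrite /count_i count_filter; apply: sub_count => x /andP[].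
case E: (ev n) => [|w].
- case Q: (squeue st) => [|a [|a' q]].
  + by rewrite (step_good_empty _ _ E Q).
  + by rewrite (step_good_sole _ _ E Q).
  + rewrite (step_auction _ _ E Q) -Q /count_i count_map.
    rewrite (@eq_count _ _ (fun e => eid e == i)) => [|x]; last first.
      by rewrite /preim /= eid_mark_loser.
    exact: leq_trans (count_sub _ _) (leq_addr _ _).
- case: (posnP (sinv st)) => [z|p].
  + rewrite (step_survival _ _ E z) /count_i count_map /=.
    apply: leq_trans (count_sub _ _) _.
    by rewrite /count_i -cats1 count_cat /= addn0.
  + by rewrite (step_sale _ _ E p) /=; case: ifP => _ /=; rewrite leq_addr.
Qed.

Lemma absent_count_i st : absent st -> count_i (squeue st) = 0%N.
Proof.
case: st => l q; rewrite /absent /count_i /=; elim: q => [|e q IH] //= ab.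
rewrite IH => [|x qx]; last by apply: ab; right.
by case: eqP => // /(ab e (or_introl erefl)).
Qed.

Lemma run_count_i sg n : (count_i (squeue (run sg n)) <= 1)%N.
Proof.
elim: n => [|n IH] //=; apply: leq_trans (step_count_i _ _ _ _) _.
have [ni|_] := eqVneq n i; last by rewrite addn0.
by rewrite absent_count_i //; apply: run_absent; rewrite ni.
Qed.

Lemma count_i_uniq q a b : (count_i q <= 1)%N -> List.In a q -> List.In b q ->
  eid a = i -> eid b = i -> a = b.
Proof.
have count_pos c q' : List.In c q' -> eid c = i -> (0 < count_i q')%N.
  elim: q' => [|x q' IH] //= [<- ->|qc ci]; first by rewrite eqxx.
  by rewrite (leq_trans (IH qc ci)) ?leq_addl.
elim: q => [|x q IH] //= c1 [<-|qa] [<-|qb] ai bi //.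
- by move: c1 (count_pos _ _ qb bi); rewrite ai eqxx; case: (count_i q).
- by move: c1 (count_pos _ _ qa ai); rewrite bi eqxx; case: (count_i q).
- by apply: IH => //; apply: leq_trans (leq_addl _ _) c1.
Qed.

Lemma run_uniq_i sg n a b : List.In a (squeue (run sg n)) -> List.In b (squeue (run sg n)) ->
  eid a = i -> eid b = i -> a = b.
Proof. exact: count_i_uniq (run_count_i sg n). Qed.

Lemma step_entry sg ov st n e' : List.In e' (squeue (step sg ov st n).1) ->
  exists2 e, List.In e (squeue st) \/ e = arrival n &
    eid e' = eid e /\
    [\/ e' = e /\ List.In e (squeue st),
        exists s E, [/\ e' = survivor n s E.1 e, (s, false) <=d E & E <d point sg ov n s e]
      | List.In e (squeue st) /\ e' = mark_loser sg ov n e].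
Proof.
case E: (ev n) => [|w].
- case Q: (squeue st) => [|a [|a' q]].
  + by rewrite (step_good_empty _ _ E Q).
  + by rewrite (step_good_sole _ _ E Q).
  + rewrite (step_auction _ _ E Q) -Q => /In_map [x /In_filter [qx _] ->].
    by exists x; [left | rewrite eid_mark_loser; split=> //; constructor 3].
- case: (posnP (sinv st)) => [z|p].
  + rewrite (step_survival _ _ E z) => /In_map [x /In_filter [qx ltE] ->].
    exists x; first by case/In_rcons: qx; [left | right].
    split=> //; constructor 2; do 2 eexists; split; first reflexivity.
      exact: start_le_survival_end.
    exact: ltE.
  + rewrite (step_sale _ _ E p) /=; case: ifP => _ /= qe'.
    all: by exists e'; [left | split=> //; constructor 1].
Qed.

Lemma survivor_price_le_bid sg n s E e b d : estat e = Passive b d ->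
  (s, false) <=d E -> E <d point sg None n s e -> E.1 <= b.
Proof. by rewrite /point /eff_stat => -> sE /(lt_proxy_point sE) []. Qed.

Definition reserve_le_proxy st := forall e, List.In e (squeue st) -> eid e = i ->
  forall b d, estat e = Passive b d -> eres e <= b.

Lemma step_reserve_le_proxy sg st n :
  reserve_le_proxy st -> reserve_le_proxy (step sg None st n).1.
Proof.
move=> h e' /step_entry [e qe [-> [[-> qe']|[s [E [-> sE ltE]]]|[qe' ->]]]] ei b d.
- exact: h.
- move=> /= es; case: qe => [qe|ae]; last by rewrite ae in es.
  by rewrite ge_max (h _ qe ei _ _ es) (survivor_price_le_bid es sE ltE).
- rewrite /mark_loser; case es: (estat e) => [|b' d'] /=.
    by case=> <- _; rewrite /bidof /eff_stat es le_max lexx.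
  by rewrite es => -[<- _]; apply: h es.
Qed.

Lemma run_reserve_le_proxy sg n : reserve_le_proxy (run sg n).
Proof. by elim: n => [|n IH]; [move=> e [] | apply: step_reserve_le_proxy]. Qed.

Definition reserve_ge x st := forall e, List.In e (squeue st) -> eid e = i -> x <= eres e.

Lemma step_reserve_ge x sg ov st n : n <> i -> reserve_ge x st -> reserve_ge x (step sg ov st n).1.
Proof.
move=> ni h e' /step_entry [e qe [-> [[-> qe']|[s [E [-> _ _]]]|[qe' ->]]]] ei.
- exact: h.
- case: qe => [qe|ae]; last by move: ei; rewrite ae.
  by rewrite /= le_max (h _ qe ei).
- by rewrite eres_mark_loser; apply: h.
Qed.

Lemma run_from_reserve_ge x sg ov st k m : (i < k)%N ->
  reserve_ge x st -> reserve_ge x (run_from sg ov st k m).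
Proof.
move=> ik h; elim: m => [|m IH] //=; apply: step_reserve_ge => // e.
by move: ik; rewrite -e ltnNge leq_addr.
Qed.

Section Truthful.
Variables (sg : nat -> strategy) (v : R).
Hypotheses (sg_i : sg i = truthful v) (v_ge0 : 0 <= v).

Definition truthful_entry st := forall e, List.In e (squeue st) -> eid e = i ->
  eres e <= v /\ forall b d, estat e = Passive b d -> b = v /\ d = None.

Lemma truthful_point n s e : estat e = Active R -> eid e = i ->
  point sg None n s e = (Num.max s v, false).
Proof. by rewrite /point /eff_stat => -> ->; rewrite sg_i. Qed.

Lemma step_truthful_entry st n : truthful_entry st -> truthful_entry (step sg None st n).1.
Proof.
move=> h e' /step_entry [e qe [-> [[-> qe']|[s [E [-> sE ltE]]]|[qe' ->]]]] ei.
- exact: h.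
- have [re pe] : eres e <= v /\ forall b d, estat e = Passive b d -> b = v /\ d = None.
    by case: qe => [qe|->]; [apply: h | split=> // b d].
  split=> [|b d /= /pe //]; rewrite /= ge_max re /=.
  case es: (estat e) => [|b d]; last first.
    by have [<- _] := pe _ _ es; apply: survivor_price_le_bid es sE ltE.
  by apply/ltW/(drop_lt_max sE); rewrite -(truthful_point n s es ei).
- have [re pe] := h _ qe' ei; rewrite eres_mark_loser; split=> // b d.
  rewrite /mark_loser; case es: (estat e) => [|b' d'] /=; last exact: pe.
  by case=> <- <-; rewrite /bidof /eff_stat es ei sg_i /= max_r.
Qed.

Lemma run_truthful_entry n : truthful_entry (run sg n).
Proof. by elim: n => [|n IH]; [move=> e [] | apply: step_truthful_entry]. Qed.

End Truthful.

(** * Coupling two plays that differ in buyer i's bid *)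

Definition only_i ov := forall j B, ov = Some (j, B) -> j = i.

Lemma only_i_None : only_i None. Proof. by []. Qed.

Lemma only_i_proxy B : only_i (Some (i, B)). Proof. by move=> j B' [->]. Qed.

Lemma eff_stat_other ov e : only_i ov -> eid e <> i -> eff_stat ov e = estat e.
Proof. by case: ov => [[j B]|] // /(_ j B erefl) -> ne; rewrite /eff_stat; case: eqP. Qed.

Lemma eff_stat_proxy B e : eid e = i -> eff_stat (Some (i, B)) e = Passive B None.
Proof. by move=> ei; rewrite /eff_stat ei eqxx. Qed.

Definition twin (a b : entry) :=
  [/\ eid a = eid b, eid a = i -> eres a = eres b & eid a <> i -> a = b].

Lemma twin_refl (a : entry) : twin a a. Proof. by []. Qed.

Lemma twins_sym q1 q2 : List.Forall2 twin q1 q2 -> List.Forall2 twin q2 q1.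
Proof.
move/List.Forall2_flip; apply: List.Forall2_impl => b a [ab r o].
by split=> [|bi|bo]; [rewrite ab | rewrite r // ab | rewrite o // ab].
Qed.

(* At event [n] buyer [i]'s entry acts as a bidder with fixed bid [B]: a (real or
   counterfactual) proxy with bid [B], or an active buyer whose sealed bid in the
   assignment auction held at [n] is [B]. *)
Definition fixed_bid ov sg n B e := eid e = i -> eres e <= B /\
  ((exists d, eff_stat ov e = Passive B d) \/
   [/\ eff_stat ov e = Active R, ev n = Good R &
       Num.max (eres e) (bid (sg i) (ehist e) (tm n)) = B]).

Lemma fixed_bid_proxy sg n B e : (eid e = i -> eres e <= B) -> fixed_bid (Some (i, B)) sg n B e.
Proof. by move=> h ei; split; [apply: h | left; exists None; apply: eff_stat_proxy]. Qed.

Lemma bidof_fixed ov sg n B e : only_i ov -> eid e = i -> fixed_bid ov sg n B e ->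
  bidof sg ov n e = B.
Proof. by move=> _ ei /(_ ei) [_ [[d h]|[h _ hb]]]; rewrite /bidof h // ei. Qed.

Lemma fixed_bid_shift ov sg n m B e : ev n <> Good R ->
  fixed_bid ov sg n B e -> fixed_bid ov sg m B e.
Proof. by move=> nG h /h [? [?|[]]]; split=> //; left. Qed.

Lemma fixed_bid_mark_loser ov sg n m B e : only_i ov ->
  fixed_bid ov sg n B e -> fixed_bid ov sg m B (mark_loser sg ov n e).
Proof.
move=> ovi h; rewrite /fixed_bid eid_mark_loser eres_mark_loser => ei.
have [re hs] := h ei; split=> //; left.
case: ov ovi h hs => [[j B'] /(_ j B' erefl) ji|_] h hs.
  subst j; rewrite eff_stat_proxy ?eid_mark_loser //; exists None.
  by case: hs => [[d]|[]]; rewrite eff_stat_proxy // => -[->].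
rewrite /mark_loser; case es: (estat e) => [|b d] /=.
  by eexists; rewrite /eff_stat /= (bidof_fixed only_i_None ei h).
by case: hs => [[d' ed]|[ea _ _]]; [exists d' | rewrite /eff_stat es in ea].
Qed.

Section Coupling.
Variables (sg1 sg2 : nat -> strategy) (ov1 ov2 : option (nat * R)) (B1 B2 : R).
Hypotheses (ov1i : only_i ov1) (ov2i : only_i ov2)
  (sg12 : forall j, j <> i -> sg1 j = sg2 j) (B12 : B1 <= B2).

Lemma bidof_other n e : eid e <> i -> bidof sg1 ov1 n e = bidof sg2 ov2 n e.
Proof. by move=> ne; rewrite /bidof (eff_stat_other ov1i ne) (eff_stat_other ov2i ne) sg12. Qed.

Lemma point_other n s e : eid e <> i -> point sg1 ov1 n s e = point sg2 ov2 n s e.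
Proof. by move=> ne; rewrite /point (eff_stat_other ov1i ne) (eff_stat_other ov2i ne) sg12. Qed.

(* Two plays that differ only in buyer [i], who acts with the fixed bid [B1] in
   the first and [B2 >= B1] in the second. *)
Definition coupled_entry n (a b : entry) :=
  [/\ twin a b, fixed_bid ov1 sg1 n B1 a & fixed_bid ov2 sg2 n B2 b].

Definition coupled n st1 st2 :=
  sinv st1 = sinv st2 /\ List.Forall2 (coupled_entry n) (squeue st1) (squeue st2).

Lemma coupled_entry_i n (a b : entry) :
  coupled_entry n a b -> eid a = i -> eid b = i /\ eres a = eres b.
Proof. by case=> -[ab r _] _ _ ai; rewrite -ab r. Qed.

Lemma coupled_twins n st1 st2 : coupled n st1 st2 ->
  List.Forall2 twin (squeue st1) (squeue st2).
Proof. by case=> _; apply: List.Forall2_impl => a b []. Qed.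

Lemma coupled_reserve_l n st1 st2 a : coupled n st1 st2 ->
  List.In a (squeue st1) -> eid a = i -> eres a <= B1.
Proof. by move=> [_ q12] qa ai; have [b _ [_ fa _]] := Forall2_In_l q12 qa; case: (fa ai). Qed.

Lemma coupled_reserve_r n st1 st2 b : coupled n st1 st2 ->
  List.In b (squeue st2) -> eid b = i -> eres b <= B1.
Proof.
move=> [_ q12] /(Forall2_In_r q12) [a _ ab] bi.
have ai : eid a = i by case: ab => -[-> _ _].
by have [_ <-] := coupled_entry_i ab ai; case: ab => _ /(_ ai) [].
Qed.

Variant coupled_step_spec n (o1 o2 : state * seq (nat * result R)) : Prop :=
  | CoupledStay of coupled n.+1 o1.1 o2.1 & unzip1 o1.2 = unzip1 o2.2
  | CoupledAhead of i \in unzip1 o2.2 & i \notin unzip1 o1.2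
  | CoupledDropped of absent o1.1 & o1.2 = [::] &
      (forall e, List.In e (squeue o2.1) -> eid e = i -> B1 <= eres e /\ B1 < B2).

Lemma coupled_mark_loser n a b : coupled_entry n a b ->
  coupled_entry n.+1 (mark_loser sg1 ov1 n a) (mark_loser sg2 ov2 n b).
Proof.
case=> -[ab r o] fa fb; split; try exact: fixed_bid_mark_loser.
split; rewrite !eid_mark_loser ?eres_mark_loser // => ne.
by rewrite -(o ne) /mark_loser (bidof_other n ne) (sg12 ne).
Qed.

Lemma coupled_winner n a1 q1 a2 q2 :
  List.Forall2 (coupled_entry n) (a1 :: q1) (a2 :: q2) ->
  let w1 := winner sg1 ov1 n a1 q1 in let w2 := winner sg2 ov2 n a2 q2 in
  eid w1 = eid w2 \/ eid w2 = i /\ eid w1 <> i.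
Proof.
move=> q12; rewrite !winnerE.
have c12 : @Order.le _ (R *l nat)%type (B1, tb n i) (B2, tb n i).
  by rewrite lexi_pair B12 lexx implybT.
have rel_special a b : coupled_entry n a b -> (eid a == i) = (eid b == i).
  by case=> -[-> _ _].
have rel_key a b : coupled_entry n a b -> eid a == i ->
    key sg1 ov1 n a = (B1, tb n i) /\ key sg2 ov2 n b = (B2, tb n i).
  move=> ab /eqP ai; have [bi _] := coupled_entry_i ab ai; case: ab => _ fa fb.
  by rewrite /key (bidof_fixed ov1i ai fa) (bidof_fixed ov2i bi fb) ai bi.
have rel_other a b : coupled_entry n a b -> eid a != i ->
    a = b /\ key sg1 ov1 n a = key sg2 ov2 n a.
  by case=> -[_ _ o] _ _ /eqP na; rewrite -(o na); split=> //; rewrite /key bidof_other.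
case: (argmax_raise c12 rel_special rel_key rel_other q12) => [[sw ow]|[/eqP w2i /eqP w1n]].
  by left; case: eqP sw ow => [-> /esym/eqP ->|_ _ /(_ isT) ->].
by right.
Qed.

Lemma coupled_good n st1 st2 : ev n = Good R -> coupled n st1 st2 ->
  coupled_step_spec n (step sg1 ov1 st1 n) (step sg2 ov2 st2 n).
Proof.
move=> EG [inv q12]; have sz := Forall2_size q12.
case Q1: (squeue st1) q12 sz => [|a [|a' q1]]; case Q2: (squeue st2) => [|b [|b' q2]] //= q12 _.
- rewrite (step_good_empty _ _ EG Q1) (step_good_empty _ _ EG Q2) inv.
  by apply: CoupledStay => //; split=> //; constructor.
- rewrite (step_good_sole _ _ EG Q1) (step_good_sole _ _ EG Q2) /=.
  case/List.Forall2_cons_iff: q12 => -[[-> _ _] _ _] _.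
  by apply: CoupledStay => //; split=> //; constructor.
- rewrite (step_auction _ _ EG Q1) (step_auction _ _ EG Q2).
  case: (coupled_winner q12) => [ew|[w2i w1n]]; last first.
    by apply: CoupledAhead; rewrite /= inE ?w2i ?eqxx //; apply/eqP => /esym.
  apply: CoupledStay; last by rewrite /= ew.
  split=> //; apply: Forall2_map (Forall2_filter _ q12) => [x y|x y [[-> _ _] _ _]].
    exact: coupled_mark_loser.
  by rewrite ew.
Qed.

Lemma coupled_point_i n s a b : ev n <> Good R -> coupled_entry n a b -> eid a = i ->
  point sg1 ov1 n s a = proxy_point B1 s /\ point sg2 ov2 n s b = proxy_point B2 s.
Proof.
move=> nG ab ai; have [bi _] := coupled_entry_i ab ai; case: ab => _ fa fb.
have [_ [[d1 e1]|[_ //]]] := fa ai; have [_ [[d2 e2]|[_ //]]] := fb bi.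
by rewrite /point e1 e2.
Qed.

Lemma coupled_survivor n s p a b : ev n <> Good R -> p <= B1 -> coupled_entry n a b ->
  coupled_entry n.+1 (survivor n s p a) (survivor n s p b).
Proof.
have eff_survivor ov e : eff_stat ov (survivor n s p e) = eff_stat ov e by case: ov => [[]|].
move=> nG pB1 [[ab r o] fa fb]; split.
- by split=> //= [ai|na]; [rewrite r | rewrite (o na)].
- move=> /= ai; have [ra [[d e1]|[_ //]]] := fa ai.
  by split; [rewrite ge_max ra | left; exists d; rewrite eff_survivor].
- move=> /= bi; have [rb [[d e2]|[_ //]]] := fb bi.
  by split; [rewrite ge_max rb (le_trans pB1 B12) | left; exists d; rewrite eff_survivor].
Qed.

Lemma coupled_survival n w st1 st2 : n <> i -> ev n = Buyer w -> sinv st1 = 0%N ->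
  coupled n st1 st2 -> coupled_step_spec n (step sg1 ov1 st1 n) (step sg2 ov2 st2 n).
Proof.
move=> ni E z1 [inv q12]; have z2 : sinv st2 = 0%N by rewrite -inv.
have nG : ev n <> Good R by rewrite E.
rewrite (step_survival _ _ E z1) (step_survival _ _ E z2) /= -(Forall2_size q12).
set s := vh _; set init := (Num.max s _, false).
have {}q12 : List.Forall2 (coupled_entry n)
    (rcons (squeue st1) (arrival n)) (rcons (squeue st2) (arrival n)).
  by apply: Forall2_rcons q12 _; split=> // /ni.
have point_i a b (ab : coupled_entry n a b) (ai : eid a == i) := coupled_point_i s nG ab (eqP ai).
have point_o a b (ab : coupled_entry n a b) (na : eid a != i) :
    point sg1 ov1 n s a = point sg2 ov2 n s b.
  by move/eqP: na => na; case: ab => -[_ _ /(_ na) <-] _ _; apply: point_other.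
have := foldr_min_raise (proxy_point_mono s B12) init q12 point_i point_o.
set E1 := foldr _ _ (map _ _); set E2 := foldr _ _ (map _ _) => hmin.
have sE1 : (s, false) <=d E1 by apply: start_le_survival_end.
have [lt1|nlt1] := boolP (E1 <d proxy_point B1 s).
  have eqE : E1 = E2 by case: hmin => // -[h _]; rewrite h ltxx in lt1.
  have [_ E1B1] := lt_proxy_point sE1 lt1.
  apply: CoupledStay => //; split=> //; rewrite -eqE.
  apply: Forall2_map (Forall2_filter _ q12) => [a b|a b ab]; first exact: coupled_survivor.
  have [ai|na] := eqVneq (eid a) i; last by rewrite (point_o _ _ ab na).
  have [-> ->] := point_i _ _ ab (introT eqP ai).
  by rewrite lt1 (lt_le_trans lt1 (proxy_point_mono s B12)).
have lP : proxy_point B1 s <=d E2.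
  by case: hmin => [<-|[_ //]]; rewrite leNgt.
apply: CoupledDropped => // e.
  case/In_map=> x /In_filter [qx ltx] -> /= xi.
  have [y _ xy] := Forall2_In_l q12 qx.
  by move: ltx; rewrite (point_i _ _ xy (introT eqP xi)).1 (negbTE nlt1).
case/In_map=> y /In_filter [qy lty] -> /= yi.
have [x _ xy] := Forall2_In_r q12 qy.
have xi : eid x = i by case: xy => -[-> _ _].
move: lty; rewrite (point_i _ _ xy (introT eqP xi)).2 => lty.
split; last exact: proxy_point_lt (le_lt_trans lP lty).
by rewrite le_max (le_trans (le_proxy_point B1 s) (drop_le_fst lP)) orbT.
Qed.

Lemma coupled_sale n w st1 st2 : n <> i -> ev n = Buyer w -> (0 < sinv st1)%N ->
  coupled n st1 st2 -> coupled_step_spec n (step sg1 ov1 st1 n) (step sg2 ov2 st2 n).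
Proof.
move=> ni E p [inv q12]; have p2 : (0 < sinv st2)%N by rewrite -inv.
rewrite (step_sale _ _ E p) (step_sale _ _ E p2) /= -inv (sg12 ni).
have {}q12 : List.Forall2 (coupled_entry n.+1) (squeue st1) (squeue st2).
  apply: List.Forall2_impl q12 => a b [ab fa fb].
  by split=> //; [apply: fixed_bid_shift fa | apply: fixed_bid_shift fb]; rewrite E.
by case: ifP => _; apply: CoupledStay.
Qed.

Lemma coupled_step n st1 st2 : n <> i -> coupled n st1 st2 ->
  coupled_step_spec n (step sg1 ov1 st1 n) (step sg2 ov2 st2 n).
Proof.
move=> ni C; case E: (ev n) => [|w]; first exact: coupled_good.
have [z|p] := posnP (sinv st1); [exact: coupled_survival E z C | exact: coupled_sale E p C].
Qed.

Section Horizon.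
Variables (k : nat) (st1 st2 : state).
Hypotheses (ik : (i < k)%N) (C0 : coupled k st1 st2).

Local Notation run1 := (run_from sg1 ov1 st1 k).
Local Notation run2 := (run_from sg2 ov2 st2 k).
Local Notation out1 := (out_from sg1 ov1 st1 k).
Local Notation out2 := (out_from sg2 ov2 st2 k).

Lemma addn_neq_i m : (k + m)%N <> i.
Proof. by move=> e; move: ik; rewrite -e ltnNge leq_addr. Qed.

Lemma coupled_run_from m : (forall m', (m' < m)%N -> i \notin unzip1 (out2 m')) ->
  coupled (k + m) (run1 m) (run2 m) /\ (forall m', (m' < m)%N -> i \notin unzip1 (out1 m'))
  \/ exists2 m0, (m0 < m)%N & absent (run1 m0.+1) /\
       forall e, List.In e (squeue (run2 m0.+1)) -> eid e = i -> B1 <= eres e /\ B1 < B2.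
Proof.
elim: m => [|m IH] out2N; first by left; rewrite addn0.
case: IH => [m' lt|[Cm out1N]|[m0 lt rest]]; first by apply/out2N/ltnW.
  2: by right; exists m0 => //; apply: ltnW.
case: (coupled_step (addn_neq_i (m := m)) Cm) => [Cn ids|served2 _|ab1 _ hB].
- left; split; first by rewrite addnS.
  move=> m'; rewrite ltnS leq_eqVlt => /orP[/eqP ->|]; last exact: out1N.
  by rewrite /out_from ids; apply: out2N.
- by move: (out2N m (ltnSn m)); rewrite /out_from served2.
- by right; exists m.
Qed.

Lemma absent_out_from m0 m : absent (run1 m0.+1) -> (m0 < m)%N -> i \notin unzip1 (out1 m).
Proof.
move=> ab lt; rewrite -(subnKC lt) out_from_add.
by have := @absent_run_from sg1 ov1 _ _ (m - m0.+1) (leq_trans ik (leq_addr m0.+1 k)) ab; case.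
Qed.

Lemma coupled_served m1 : i \in unzip1 (out1 m1) ->
  exists2 m2, (m2 <= m1)%N & i \in unzip1 (out2 m2).
Proof.
move=> s1.
have [/hasP[m2]|/hasPn out2N] := boolP (has (fun m => i \in unzip1 (out2 m)) (iota 0 m1.+1)).
  by rewrite mem_iota add0n ltnS => /andP[_ le] s2; exists m2.
have out2N' m' : (m' < m1)%N -> i \notin unzip1 (out2 m').
  by move=> lt; apply: out2N; rewrite mem_iota add0n ltnS (ltnW lt).
have := out2N m1; rewrite mem_iota add0n ltnS leqnn => /(_ isT) ns2.
case: (coupled_run_from out2N') => [[Cm _]|[m0 lt [ab _]]]; last first.
  by move: s1; rewrite (negbTE (absent_out_from ab lt)).
case: (coupled_step (addn_neq_i (m := m1)) Cm) => [_ ids|s2 _|_ o1 _].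
- by move: ns2; rewrite /out_from -ids s1.
- by move: ns2; rewrite /out_from s2.
- by move: s1; rewrite /out_from o1.
Qed.

Lemma coupled_first_served m1 : i \in unzip1 (out1 m1) ->
  exists2 m2, (m2 <= m1)%N & [/\ i \in unzip1 (out2 m2),
    forall m', (m' < m2)%N -> i \notin unzip1 (out2 m') &
    coupled (k + m2) (run1 m2) (run2 m2)].
Proof.
move=> s1; have [m le sm] := coupled_served s1.
have ex : exists m, i \in unzip1 (out2 m) by exists m.
case: (ex_minnP ex) => m2 s2 mn; have m2le := leq_trans (mn _ sm) le.
have out2N m' : (m' < m2)%N -> i \notin unzip1 (out2 m').
  by move=> lt; apply/negP => /mn; rewrite leqNgt lt.
exists m2 => //; split=> //; case: (coupled_run_from out2N) => [[]//|[m0 lt [ab _]]].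
by move: s1; rewrite (negbTE (absent_out_from ab (leq_trans lt m2le))).
Qed.

End Horizon.

End Coupling.

Lemma coupled_of_twins sg1 sg2 ov1 ov2 B1 B2 n st1 st2 :
  sinv st1 = sinv st2 -> List.Forall2 twin (squeue st1) (squeue st2) ->
  (forall a, List.In a (squeue st1) -> fixed_bid ov1 sg1 n B1 a) ->
  (forall b, List.In b (squeue st2) -> fixed_bid ov2 sg2 n B2 b) ->
  coupled sg1 sg2 ov1 ov2 B1 B2 n st1 st2.
Proof.
move=> inv q12 f1 f2; split=> //.
by apply: Forall2_in_impl q12 => a b qa qb ab; split; [| apply: f1 | apply: f2].
Qed.

Lemma served_proxy sg1 sg2 ov1 k st1 st2 B1 B2 :
  only_i ov1 -> (forall j, j <> i -> sg1 j = sg2 j) -> (i < k)%N -> B1 <= B2 ->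
  sinv st1 = sinv st2 -> List.Forall2 twin (squeue st1) (squeue st2) ->
  (forall a, List.In a (squeue st1) -> fixed_bid ov1 sg1 k B1 a) ->
  (exists m, i \in unzip1 (out_from sg1 ov1 st1 k m)) ->
  exists m, i \in unzip1 (out_from sg2 (Some (i, B2)) st2 k m).
Proof.
move=> ov1i sg12 ik B12 inv q12 f1 [m s1].
have C : coupled sg1 sg2 ov1 (Some (i, B2)) B1 B2 k st1 st2.
  apply: coupled_of_twins => // b qb; apply: fixed_bid_proxy => bi.
  have [a qa [ab r _]] := Forall2_In_r q12 qb; have ai : eid a = i by rewrite ab.
  by rewrite -(r ai); case: (f1 _ qa ai) => ra _; apply: le_trans ra B12.
by have [m2 _ s2] := coupled_served ov1i (@only_i_proxy B2) sg12 B12 ik C s1; exists m2.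
Qed.

Lemma served_proxy_mono sg1 sg2 k st1 st2 B1 B2 :
  (forall j, j <> i -> sg1 j = sg2 j) -> (i < k)%N -> B1 <= B2 ->
  sinv st1 = sinv st2 -> List.Forall2 twin (squeue st1) (squeue st2) ->
  (forall a, List.In a (squeue st1) -> eid a = i -> eres a <= B1) ->
  (exists m, i \in unzip1 (out_from sg1 (Some (i, B1)) st1 k m)) ->
  exists m, i \in unzip1 (out_from sg2 (Some (i, B2)) st2 k m).
Proof.
move=> sg12 ik B12 inv q12 r1; apply: served_proxy (@only_i_proxy B1) sg12 ik B12 inv q12 _.
by move=> a qa; apply: fixed_bid_proxy; apply: r1.
Qed.

Lemma wins_cf_mono sg k B1 B2 : (i < k)%N -> B1 <= B2 ->
  (forall a, List.In a (squeue (run sg k)) -> eid a = i -> eres a <= B1) ->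
  wins_cf sg k i B1 -> wins_cf sg k i B2.
Proof.
move=> ik B12 r1 /wins_cfE w1; apply/wins_cfE.
exact: served_proxy_mono ik B12 erefl (Forall2_self _ twin_refl) r1 w1.
Qed.

Lemma step_congr sg1 sg2 ov st n :
  (forall e, List.In e (squeue st) -> sg1 (eid e) = sg2 (eid e)) -> sg1 n = sg2 n ->
  step sg1 ov st n = step sg2 ov st n.
Proof.
move=> hq hn; case E: (ev n) => [|w].
- case Q: (squeue st) => [|a [|a' q]].
  + by rewrite !(step_good_empty _ _ E Q).
  + by rewrite !(step_good_sole _ _ E Q).
  + rewrite Q in hq; have hb x : List.In x [:: a, a' & q] -> bidof sg1 ov n x = bidof sg2 ov n x.
      by move=> qx; rewrite /bidof hq.
    have hw : winner sg1 ov n a (a' :: q) = winner sg2 ov n a (a' :: q).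
      by rewrite !winnerE; apply: eq_in_argmax => x qx; rewrite /key hb.
    rewrite !(step_auction _ _ E Q) hw; congr (State _ _, _).
    by apply: eq_In_map => x /In_filter [qx _]; rewrite /mark_loser /bidof hq.
- case: (posnP (sinv st)) => [z|p]; last by rewrite !(step_sale _ _ E p) hn.
  rewrite !(step_survival _ _ E z); set s := vh _.
  have hp x : List.In x (rcons (squeue st) (arrival n)) -> point sg1 ov n s x = point sg2 ov n s x.
    by case/In_rcons => [qx|->]; rewrite /point ?(hq _ qx) //= hn.
  rewrite (eq_In_map hp); congr (State _ (map _ _), _).
  by apply: eq_In_filter => x qx; rewrite hp.
Qed.

Lemma survival_compare sgA sgB S n w e0 :
  (forall j, j <> i -> sgA j = sgB j) -> ev n = Buyer w -> sinv S = 0%N ->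
  List.In e0 (rcons (squeue S) (arrival n)) -> eid e0 = i ->
  (forall x, List.In x (rcons (squeue S) (arrival n)) -> eid x = i -> x = e0) ->
  let s := vh (size (squeue S))%:Z in
  point sgA None n s e0 <=d point sgB None n s e0 ->
  (step sgA None S n).1 = (step sgB None S n).1 /\
    (exists2 E, E <d point sgA None n s e0 /\ (s, false) <=d E &
      (exists2 e, List.In e (squeue (step sgB None S n).1) & eid e = i) /\
      forall e, List.In e (squeue (step sgB None S n).1) -> eid e = i -> e = survivor n s E.1 e0)
  \/ absent (step sgA None S n).1 /\
    forall e, List.In e (squeue (step sgB None S n).1) -> eid e = i ->
      (point sgA None n s e0).1 <= eres e.
Proof.
move=> sgAB E z qe0 e0i uniq s lePAB.
rewrite (step_survival _ _ E z) (step_survival _ _ E z) -/s /=.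
set q := rcons _ _; set init := (Num.max s _, false).
set PA := point sgA None n s e0 in lePAB *; set PB := point sgB None n s e0 in lePAB *.
have qq : List.Forall2 (fun x y => x = y /\ List.In x q) q q.
  by apply: Forall2_in_impl (Forall2_self _ (@erefl entry)) => x y qx _ <-.
have point_i x y : x = y /\ List.In x q -> eid x == i ->
    point sgA None n s x = PA /\ point sgB None n s y = PB.
  by case=> <- qx /eqP xi; rewrite (uniq x qx xi).
have point_o x y : x = y /\ List.In x q -> eid x != i ->
    point sgA None n s x = point sgB None n s y.
  by case=> <- _ /eqP xi; apply: point_other.
have := foldr_min_raise lePAB init qq point_i point_o.
set EA := foldr _ _ (map _ _); set EB := foldr _ _ (map _ _) => hmin.
have sEB : (s, false) <=d EB by apply: start_le_survival_end.
have [ltA|nltA] := boolP (EA <d PA); last first.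
  right; split=> e /In_map [x /In_filter [qx ltx] ->] /= xi.
    by move: ltx; rewrite (uniq x qx xi) -/PA (negbTE nltA).
  have lePA : PA <=d EB by case: hmin => [<-|[_ //]]; rewrite leNgt.
  by rewrite le_max (drop_le_fst lePA) orbT.
have eqE : EA = EB by case: hmin => // -[h _]; rewrite h ltxx in ltA.
have ltB : EB <d PB by rewrite -eqE (lt_le_trans ltA lePAB).
left; split.
  rewrite eqE; congr (State _ (map _ _)); apply: eq_In_filter => x qx.
  have [xi|xn] := eqVneq (eid x) i; last by rewrite (point_o x x (conj erefl qx) xn).
  by rewrite (uniq x qx xi) -/PA -/PB -eqE ltA eqE ltB.
exists EB; first by split; [rewrite -eqE |].
split; first by exists (survivor n s EB.1 e0); [apply/In_map_f/In_filter_intro | ].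
by move=> e /In_map [x /In_filter [qx _] ->] /= xi; rewrite (uniq x qx xi).
Qed.

(** * Payoffs *)

Lemma isSome_outcome sg n :
  isSome (outcome sg n i) = (i \in unzip1 (step sg None (run sg n) n).2).
Proof.
by rewrite /outcome; elim: (step _ _ _ _).2 => [|[j x] l IH] //=; rewrite inE eq_sym; case: eqP.
Qed.

Lemma outcome_Some sg n x :
  (step sg None (run sg n) n).2 = [:: (i, x)] -> outcome sg n i = Some x.
Proof. by rewrite /outcome => ->; rewrite /= eqxx. Qed.

Lemma outcome_None sg n :
  i \notin unzip1 (step sg None (run sg n) n).2 -> outcome sg n i = None.
Proof. by rewrite -isSome_outcome; case: (outcome sg n i). Qed.

Definition value sg v n (x : result R) : R :=
  match x with
  | RBuy p => v - p
  | RGood p pres => if pres then v - p else 0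
  | RWin r pres => if pres then v - cutoff sg n i r else 0
  end.

Lemma payoff_eq0 sg v : (forall n, outcome sg n i = None) -> payoff sg i v = 0.
Proof.
by move=> none; rewrite /payoff; case: pselect => // ex; exfalso; case: ex => n; rewrite none.
Qed.

Lemma payoff_first sg v n x : (forall m, (m < n)%N -> outcome sg m i = None) ->
  outcome sg n i = Some x -> payoff sg i v = value sg v n x.
Proof.
move=> before on; rewrite /payoff; case: pselect => [ex|[]]; last by exists n; rewrite on.
case: ex_minnP => m sm mmin; suff -> : m = n by rewrite on.
have mn : (m <= n)%N by apply: mmin; rewrite on.
apply/eqP; rewrite eqn_leq mn leqNgt; apply/negP => /before om.
by rewrite om in sm.
Qed.

Lemma payoff_first_served sg v n0 : (forall m, (m < n0)%N -> outcome sg m i = None) ->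
  payoff sg i v = 0 \/ exists2 n, (n0 <= n)%N &
    (forall m, (m < n)%N -> outcome sg m i = None) /\ i \in unzip1 (step sg None (run sg n) n).2.
Proof.
move=> before; have [ex|nex] := pselect (exists n, isSome (outcome sg n i)); last first.
  by left; apply: payoff_eq0 => n; case E: (outcome sg n i) => //; case: nex; exists n; rewrite E.
right; case: (ex_minnP ex) => n sn nmin; exists n.
  by rewrite leqNgt; apply/negP => /before on; rewrite on in sn.
split; last by rewrite -isSome_outcome.
by move=> m lt; case E: (outcome sg m i) => //; have := nmin m; rewrite E leqNgt lt => /(_ isT).
Qed.

Lemma payoff_absent sg v n0 : (i < n0)%N -> absent (run sg n0) ->
  (forall m, (m < n0)%N -> outcome sg m i = None) -> payoff sg i v = 0.
Proof.
move=> ik ab before; case: (payoff_first_served v before) => [//|[n le [_]]].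
have [_] := absent_run_from sg None (n - n0) ik ab.
by rewrite /out_from run_from_run subnKC // => /negbTE->.
Qed.

Lemma reserve_le_bidof sg n w : List.In w (squeue (run sg n)) -> eid w = i ->
  eres w <= bidof sg None n w.
Proof.
move=> qw wi; rewrite /bidof /eff_stat; case ws: (estat w) => [|b d]; first by rewrite le_max lexx.
exact: (run_reserve_le_proxy qw wi ws).
Qed.

Lemma wins_at_auction sg n w : (i < n)%N -> ev n = Good R ->
  List.In w (squeue (run sg n)) -> eid w = i -> i \in unzip1 (step sg None (run sg n) n).2 ->
  wins_cf sg n i (bidof sg None n w).
Proof.
move=> ik EG qw wi sn; apply/wins_cfE.
have fw e : List.In e (squeue (run sg n)) -> fixed_bid None sg n (bidof sg None n w) e.
  move=> qe ei; rewrite -(run_uniq_i qw qe wi ei); split; first exact: reserve_le_bidof.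
  rewrite /bidof /eff_stat; case: (estat w) => [|b d]; last by left; exists d.
  by right; rewrite wi.
apply: served_proxy only_i_None (fun _ _ => erefl) ik (lexx _) erefl _ fw _.
  exact: Forall2_self _ twin_refl.
by exists 0%N; rewrite /out_from addn0.
Qed.

Variant served_spec sg v n : R -> Prop :=
  | ServedSole e of ev n = Good R & squeue (run sg n) = [:: e] & eid e = i :
      served_spec sg v n (if present None e (tm n) then v - eres e else 0)
  | ServedAuction w of List.In w (squeue (run sg n)) & eid w = i &
      eres w <= bidof sg None n w & wins_cf sg n i (bidof sg None n w) :
      served_spec sg v n (if present None w (tm n) then v - cutoff sg n i (eres w) else 0).

Lemma payoff_served sg v n : (i < n)%N -> (forall m, (m < n)%N -> outcome sg m i = None) ->
  i \in unzip1 (step sg None (run sg n) n).2 -> served_spec sg v n (payoff sg i v).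
Proof.
move=> ik before sn; have ni : n != i by rewrite neq_ltn ik orbT.
case E: (ev n) => [|w]; last first.
  case: (posnP (sinv (run sg n))) => [z|p]; first by move: sn; rewrite (step_survival _ _ E z).
  by move: sn; rewrite (step_sale _ _ E p) /=; case: ifP => //= _; rewrite inE eq_sym (negbTE ni).
case Q: (squeue (run sg n)) => [|a [|a' q]].
- by move: sn; rewrite (step_good_empty _ _ E Q).
- have ai : eid a = i by move: sn; rewrite (step_good_sole _ _ E Q) /= inE => /eqP/esym.
  have on : outcome sg n i = Some (RGood (eres a) (present None a (tm n))).
    by apply: outcome_Some; rewrite (step_good_sole _ _ E Q) ai.
  by rewrite (payoff_first v before on) /=; apply: ServedSole.
- set w := winner sg None n a (a' :: q).
  have wi : eid w = i by move: sn; rewrite (step_auction _ _ E Q) /= inE => /eqP/esym.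
  have on : outcome sg n i = Some (RWin (eres w) (present None w (tm n))).
    by apply: outcome_Some; rewrite (step_auction _ _ E Q) -/w wi.
  have qw : List.In w (squeue (run sg n)) by rewrite Q /w winnerE; apply: argmax_in.
  rewrite (payoff_first v before on) /=.
  by apply: ServedAuction => //; [exact: reserve_le_bidof | exact: wins_at_auction].
Qed.

Lemma cutoff_le sg n r B : r <= B -> wins_cf sg n i B -> cutoff sg n i r <= B.
Proof. by move=> rB w; apply: ge_inf (conj rB w); exists r => y []. Qed.

Lemma cutoff_ge sg n r : (exists B, r <= B /\ wins_cf sg n i B) -> r <= cutoff sg n i r.
Proof. by move=> [B hB]; apply: lb_le_inf; [exists B | move=> y []]. Qed.

Lemma payoff_le0 sg v n0 : (i < n0)%N -> (forall m, (m < n0)%N -> outcome sg m i = None) ->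
  (forall e, List.In e (squeue (run sg n0)) -> eid e = i -> v <= eres e) ->
  payoff sg i v <= 0.
Proof.
move=> ik before ve; case: (payoff_first_served v before) => [->//|[n le [before' sn]]].
have reserve e : List.In e (squeue (run sg n)) -> eid e = i -> v <= eres e.
  by rewrite -(subnKC le) -run_from_run; apply: run_from_reserve_ge.
case: (payoff_served v (leq_trans ik le) before' sn) => [e _ Q ei|w qw wi rb wb].
  by case: ifP => // _; rewrite subr_le0; apply: reserve ei; rewrite Q; left.
case: ifP => // _; rewrite subr_le0; apply: le_trans (reserve _ qw wi) _.
by apply: cutoff_ge; exists (bidof sg None n w).
Qed.

Lemma arrival_sale_payoff sg v w : ev i = Buyer w ->
  (forall m, (m < i)%N -> outcome sg m i = None) -> (0 < sinv (run sg i))%N ->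
  payoff sg i v = let p := vh (- (sinv (run sg i))%:Z) in
                  if accept (sg i) [:: OArr (tm i)] p then v - p else 0.
Proof.
move=> E before p; have := step_sale sg None E p; rewrite /=; case: ifP => _ st_eq.
  have on : outcome sg i i = Some (RBuy (vh (- (sinv (run sg i))%:Z))).
    by apply: outcome_Some; rewrite st_eq.
  by rewrite (payoff_first v before on).
apply: (@payoff_absent sg v i.+1) => //=; first by rewrite st_eq; apply: run_absent.
by move=> m; rewrite ltnS leq_eqVlt => /orP[/eqP->|/before//]; apply: outcome_None; rewrite st_eq.
Qed.

(** * Truthful play against an arbitrary deviation *)

Section Deviation.
Variables (sig : nat -> strategy) (v : R) (s : strategy).
Hypotheses (v_ge0 : 0 <= v) (ev_i : ev i = Buyer v).

Local Notation St := (upd_strat sig i (truthful v)).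
Local Notation Ss := (upd_strat sig i s).

Lemma St_i : St i = truthful v. Proof. by rewrite /upd_strat eqxx. Qed.

Lemma Ss_i : Ss i = s. Proof. by rewrite /upd_strat eqxx. Qed.

Lemma St_Ss j : j <> i -> St j = Ss j.
Proof. by rewrite /upd_strat => /eqP/negbTE->. Qed.

Lemma Ss_St j : j <> i -> Ss j = St j.
Proof. by move/St_Ss. Qed.

Lemma truthful_bidof n w : List.In w (squeue (run St n)) -> eid w = i -> bidof St None n w = v.
Proof.
move=> qw wi; have [rw pw] := run_truthful_entry St_i v_ge0 qw wi.
rewrite /bidof /eff_stat; case ws: (estat w) => [|b d]; last by case: (pw _ _ ws).
by rewrite wi St_i /= max_r.
Qed.

Lemma truthful_present n e t : List.In e (squeue (run St n)) -> eid e = i -> present None e t.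
Proof.
move=> qe ei; have [_ pe] := run_truthful_entry St_i v_ge0 qe ei.
by rewrite /present /eff_stat; case es: (estat e) => [|b d] //; case: (pe _ _ es) => _ ->.
Qed.

Lemma truthful_payoff_ge0 : 0 <= payoff St i v.
Proof.
have before m : (m < i)%N -> outcome St m i = None.
  move=> lt; have mi : m <> i by move=> e; rewrite e ltnn in lt.
  by have [_ /outcome_None] := absent_step St None mi (run_absent (sg := St) (ltnW lt)).
have [z|p] := posnP (sinv (run St i)); last first.
  by rewrite (arrival_sale_payoff v ev_i before p) St_i /=; case: ifP => // /ltW; rewrite subr_ge0.
have before' m : (m < i.+1)%N -> outcome St m i = None.
  rewrite ltnS leq_eqVlt => /orP[/eqP->|/before//].
  by apply: outcome_None; rewrite (step_survival _ _ ev_i z).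
case: (payoff_first_served v before') => [->//|[n le [before'' sn]]].
case: (payoff_served v le before'' sn) => [e _ Q ei|w qw wi _ ww]; case: ifP => // _.
  have qe : List.In e (squeue (run St n)) by rewrite Q; left.
  by have [re _] := run_truthful_entry St_i v_ge0 qe ei; rewrite subr_ge0.
have [rw _] := run_truthful_entry St_i v_ge0 qw wi.
by rewrite (truthful_bidof qw wi) in ww; rewrite subr_ge0; apply: cutoff_le rw ww.
Qed.

Section FirstAuction.
Variables (a : nat) (estar : entry).
Hypotheses (ia : (i < a)%N) (Ea : ev a = Good R) (same_a : run Ss a = run St a)
  (qestar : List.In estar (squeue (run St a))) (estar_i : eid estar = i)
  (estar_active : estat estar = Active R) (estar_v : eres estar <= v)
  (beforeT : forall m, (m < a)%N -> outcome St m i = None)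
  (beforeS : forall m, (m < a)%N -> outcome Ss m i = None).

Local Notation r := (eres estar).
Local Notation b := (Num.max (eres estar) (bid s (ehist estar) (tm a))).

Lemma estar_uniq e : List.In e (squeue (run St a)) -> eid e = i -> e = estar.
Proof. by move=> qe ei; apply: run_uniq_i qe qestar ei estar_i. Qed.

Lemma reserve_le_estar e : List.In e (squeue (run St a)) -> eid e = i -> eres e <= r.
Proof. by move=> qe ei; rewrite (estar_uniq qe ei). Qed.

Lemma fixed_bid_truthful e : List.In e (squeue (run St a)) -> fixed_bid None St a v e.
Proof.
move=> qe ei; rewrite (estar_uniq qe ei); split=> //; right.
by rewrite /eff_stat estar_active St_i /= max_r.
Qed.

Lemma fixed_bid_deviation e : List.In e (squeue (run Ss a)) -> fixed_bid None Ss a b e.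
Proof.
rewrite same_a => qe ei; rewrite (estar_uniq qe ei); split; first by rewrite le_max lexx.
by right; rewrite /eff_stat estar_active Ss_i.
Qed.

Lemma truthful_payoff_ge B : r <= B -> wins_cf St a i B -> v - B <= payoff St i v.
Proof.
move=> rB wB; have [Bv|vB] := lerP B v; last first.
  by apply: le_trans truthful_payoff_ge0; rewrite subr_le0 ltW.
move/wins_cfE: wB => [m1 s1].
have C : coupled St St (Some (i, B)) None B v a (run St a) (run St a).
  apply: coupled_of_twins => //; first exact: Forall2_self _ twin_refl.
    by move=> e qe; apply: fixed_bid_proxy => ei; apply: le_trans (reserve_le_estar qe ei) rB.
  exact: fixed_bid_truthful.
have [m2 le2 [s2 before2 C2]] :=
  coupled_first_served (@only_i_proxy B) only_i_None (fun _ _ => erefl) Bv ia C s1.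
rewrite out_from_run in s2; rewrite run_from_run in C2.
have ia2 : (i < a + m2)%N := leq_trans ia (leq_addr _ _).
have before m : (m < a + m2)%N -> outcome St m i = None.
  move=> lt; have [ma|am] := ltnP m a; first exact: beforeT.
  rewrite -(subnKC am); apply: outcome_None; rewrite -out_from_run; apply: before2.
  by rewrite -(ltn_add2l a) subnKC.
case: (payoff_served v ia2 before s2) => [e _ Q ei|w qw wi _ _].
  have qe : List.In e (squeue (run St (a + m2))) by rewrite Q; left.
  by rewrite (truthful_present _ qe ei) lerD2l lerN2 (coupled_reserve_r C2 qe ei).
rewrite (truthful_present _ qw wi) lerD2l lerN2 cutoff_le //.
  exact: coupled_reserve_r C2 qw wi.
apply/wins_cfE; apply: served_proxy_mono (fun _ _ => erefl) ia2 (lexx B) _ (coupled_twins C2) _ _.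
- by case: C2.
- by move=> x qx xi; apply: coupled_reserve_l C2 qx xi.
- by exists (m1 - m2)%N; rewrite -out_from_add subnKC.
Qed.

Lemma truthful_wins_deviation_bid : (exists m, i \in unzip1 (out_from Ss None (run Ss a) a m)) ->
  wins_cf St a i b.
Proof.
move=> sm; apply/wins_cfE; rewrite -same_a.
apply: served_proxy only_i_None Ss_St ia (lexx b) erefl _ fixed_bid_deviation sm.
exact: Forall2_self _ twin_refl.
Qed.

(* The core of the Cutoff Price argument: a bid [C] above [i]'s reserve that still
   wins from event [n] of the deviating play is a winning fixed bid for the
   truthful buyer from his first assignment auction [a]. *)
Lemma deviation_bound n w C : (a <= n)%N -> (forall m, (m < n)%N -> outcome Ss m i = None) ->
  i \in unzip1 (step Ss None (run Ss n) n).2 ->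
  List.In w (squeue (run Ss n)) -> eid w = i -> eres w < C -> wins_cf Ss n i C ->
  v - C <= payoff St i v.
Proof.
move=> le before sn qw wi wC wCf; set m' := (n - a)%N.
have En : n = (a + m')%N by rewrite subnKC.
have out2N m : (m < m')%N -> i \notin unzip1 (out_from Ss None (run Ss a) a m).
  by move=> lt; rewrite out_from_run -isSome_outcome before // En ltn_add2l.
have reserve_w x m0 : (m0 <= m')%N -> reserve_ge x (run Ss (a + m0)) -> x <= eres w.
  move=> le0 hx; move: qw; rewrite En -(subnKC le0) addnA -run_from_run => qw.
  by apply: run_from_reserve_ge qw wi; rewrite ?(leq_trans ia) ?leq_addr.
have rC : r <= C.
  apply/ltW/(le_lt_trans _ wC)/(reserve_w r 0%N) => // e; rewrite addn0 same_a => qe ei.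
  by rewrite (estar_uniq qe ei).
have [bC|Cb] := lerP b C.
  apply: (@truthful_payoff_ge C rC); apply: wins_cf_mono ia bC _ (truthful_wins_deviation_bid _).
    by move=> e qe ei; rewrite (estar_uniq qe ei) le_max lexx.
  by exists m'; rewrite out_from_run -En.
apply: (@truthful_payoff_ge C rC); apply/wins_cfE.
have C0 : coupled St Ss (Some (i, C)) None C b a (run St a) (run Ss a).
  rewrite same_a; apply: coupled_of_twins => //; first exact: Forall2_self _ twin_refl.
    by move=> e qe; apply: fixed_bid_proxy => ei; apply: le_trans (reserve_le_estar qe ei) rC.
  by rewrite -same_a; apply: fixed_bid_deviation.
case: (coupled_run_from (@only_i_proxy C) only_i_None St_Ss (ltW Cb) ia C0 out2N) => [[Cm _]|].
  rewrite run_from_run -En in Cm; move/wins_cfE: wCf => wCf.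
  have [m2 s2] : exists m, i \in unzip1 (out_from St (Some (i, C))
      (run_from St (Some (i, C)) (run St a) a m') n m).
    apply: served_proxy_mono Ss_St (leq_trans ia le) (lexx C) _ _ _ wCf.
    - by case: Cm.
    - exact: twins_sym (coupled_twins Cm).
    - by move=> x qx xi; apply: coupled_reserve_r Cm qx xi.
  by exists (m' + m2)%N; rewrite out_from_add -En.
move=> [m0 lt [_ hB]]; have := reserve_w C m0.+1 lt.
rewrite -run_from_run => /(_ (fun e qe ei => (hB e qe ei).1)).
by rewrite leNgt wC.
Qed.

Lemma deviation_payoff_le : payoff Ss i v <= payoff St i v.
Proof.
case: (payoff_first_served v beforeS) => [->|[n le [before sn]]]; first exact: truthful_payoff_ge0.
case: (payoff_served v (leq_trans ia le) before sn) => [e EG Q ei|w qw wi rb wb];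
  case: ifP => _; try exact: truthful_payoff_ge0.
  have qe : List.In e (squeue (run Ss n)) by rewrite Q; left.
  apply: subr_le_of_gt => C eC; apply: (deviation_bound le before sn qe ei eC).
  by apply/wins_cfE; exists 0%N; rewrite /out_from addn0 /= (step_good_sole _ _ EG Q) /= inE ei.
suff : v - payoff St i v <= cutoff Ss n i (eres w) by rewrite lerBlDr addrC -lerBlDr.
apply: lb_le_inf; first by exists (bidof Ss None n w).
move=> C [wC wCf]; rewrite lerBlDr addrC -lerBlDr.
have [lt|] := ltP (eres w) C; first exact: deviation_bound le before sn qw wi lt wCf.
move=> Cw; have -> : C = eres w by apply/eqP; rewrite eq_le Cw wC.
apply: subr_le_of_gt => C' lt; apply: (deviation_bound le before sn qw wi lt).
apply: wins_cf_mono (leq_trans ia le) (le_trans Cw (ltW lt)) _ wCf.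
by move=> x qx xi; rewrite (run_uniq_i qx qw xi wi).
Qed.

End FirstAuction.

Definition active_truthful st :=
  (exists2 e, List.In e (squeue st) & eid e = i) /\
  forall e, List.In e (squeue st) -> eid e = i -> estat e = Active R /\ eres e <= v.

(* Before buyer [i]'s first assignment auction the truthful and the deviating
   play coincide, as long as neither has ended [i]'s participation. *)
Definition undecided n :=
  [/\ forall m, (m < n)%N -> outcome St m i = None /\ outcome Ss m i = None,
      run Ss n = run St n &
      (n <= i)%N /\ absent (run St n) \/ (i < n)%N /\ active_truthful (run St n)].

Lemma survivors_active n c E e0 st : estat e0 = Active R -> eid e0 = i -> eres e0 <= v ->
  E <d point St None n c e0 -> (c, false) <=d E ->
  (exists2 e, List.In e (squeue st) & eid e = i) ->
  (forall e, List.In e (squeue st) -> eid e = i -> e = survivor n c E.1 e0) ->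
  active_truthful st.
Proof.
move=> ea e0i ev0 ltE sE ex all; split=> // e qe ei; rewrite (all e qe ei) /=; split=> //.
rewrite ge_max ev0 /=; apply/ltW/(drop_lt_max sE).
by rewrite -(truthful_point St_i n c ea e0i).
Qed.

Lemma survival_case n w e0 : (i <= n)%N -> ev n = Buyer w -> sinv (run St n) = 0%N ->
  run Ss n = run St n ->
  List.In e0 (rcons (squeue (run St n)) (arrival n)) -> eid e0 = i ->
  estat e0 = Active R -> eres e0 <= v ->
  (forall x, List.In x (rcons (squeue (run St n)) (arrival n)) -> eid x = i -> x = e0) ->
  (forall m, (m < n)%N -> outcome St m i = None /\ outcome Ss m i = None) ->
  payoff Ss i v <= payoff St i v \/ undecided n.+1.
Proof.
move=> le E z same qe0 e0i ea ev0 uniq before.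
have before' m : (m < n.+1)%N -> outcome St m i = None /\ outcome Ss m i = None.
  rewrite ltnS leq_eqVlt => /orP[/eqP->|/before//].
  by split; apply: outcome_None; rewrite ?same (step_survival _ _ E z).
have runSs : run Ss n.+1 = (step Ss None (run St n) n).1 by rewrite /= same.
set c := vh (size (squeue (run St n)))%:Z.
have stay E' : E' <d point St None n c e0 -> (c, false) <=d E' ->
    (step Ss None (run St n) n).1 = (step St None (run St n) n).1 ->
    (exists2 e, List.In e (squeue (step St None (run St n) n).1) & eid e = i) ->
    (forall e, List.In e (squeue (step St None (run St n) n).1) -> eid e = i ->
       e = survivor n c E'.1 e0) -> undecided n.+1.
  move=> ltE sE eqSsT ex all; split=> //; first by rewrite runSs eqSsT.
  by right; split=> //; apply: survivors_active ea e0i ev0 ltE sE ex all.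
have [leTS|leST] :=
  orP (@le_total _ (R *l bool)%type (point St None n c e0) (point Ss None n c e0)).
  case: (survival_compare St_Ss E z qe0 e0i uniq leTS) => [[eqTS [E' [ltE sE] [ex all]]]|[_ res]].
    by right; apply: (stay E') => //; rewrite eqTS.
  left; apply: le_trans truthful_payoff_ge0; apply: (payoff_le0 (n0 := n.+1)) => //.
    by move=> m /before' [].
  move=> e; rewrite runSs => qe ei; have := res e qe ei.
  by rewrite (truthful_point St_i n c ea e0i) /=; apply: le_trans; rewrite le_max lexx orbT.
case: (survival_compare Ss_St E z qe0 e0i uniq leST) => [[eqST [E' [ltE sE] [ex all]]]|[abs _]].
  by right; apply: (stay E') => //; apply: lt_le_trans leST.
left; rewrite (payoff_absent v (n0 := n.+1)) ?runSs //; last by move=> m /before' [].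
exact: truthful_payoff_ge0.
Qed.

Lemma undecided_absent n : n <> i -> (n <= i)%N -> undecided n -> undecided n.+1.
Proof.
move=> ni le [before same [[_ ab]|[lt _]]]; last by rewrite ltnNge le in lt.
have eqs : step Ss None (run St n) n = step St None (run St n) n.
  by apply: step_congr => [e qe|]; apply: Ss_St => //; apply: ab.
have [ab' out] := absent_step St None ni ab.
split; last by left; split; rewrite // ltn_neqAle le andbT; apply/eqP.
  move=> m; rewrite ltnS leq_eqVlt => /orP[/eqP->|/before//].
  by split; apply: outcome_None; rewrite ?same ?eqs.
by rewrite /= same eqs.
Qed.

Lemma undecided_arrival : undecided i -> payoff Ss i v <= payoff St i v \/ undecided i.+1.
Proof.
move=> [before same [[_ ab]|[]]]; last by rewrite ltnn.
have [z|p] := posnP (sinv (run St i)).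
  apply: (survival_case (w := v) (e0 := arrival i)) => //; first exact: In_rcons_r.
  by move=> x /In_rcons [qx xi|-> //]; case: (ab x qx xi).
have beforeT m lt := (before m lt).1; have beforeS m lt := (before m lt).2.
have pS : (0 < sinv (run Ss i))%N by rewrite same.
left; rewrite (arrival_sale_payoff v ev_i beforeS pS) (arrival_sale_payoff v ev_i beforeT p).
rewrite same St_i Ss_i /=; set p0 := vh _.
by case: (accept s _ p0); case: ltP => h; rewrite ?subr_le0 ?subr_ge0 // ltW.
Qed.

Lemma undecided_active n : (i < n)%N -> active_truthful (run St n) -> undecided n ->
  payoff Ss i v <= payoff St i v \/ undecided n.+1.
Proof.
move=> lt [[e0 qe0 e0i] act] [before same _].
have ni : n <> i by move=> e; rewrite e ltnn in lt.
have [ea ev0] := act _ qe0 e0i.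
have beforeT m lt' := (before m lt').1; have beforeS m lt' := (before m lt').2.
case E: (ev n) => [|w].
  case Q: (squeue (run St n)) => [|a' [|a'' q]]; first by rewrite Q in qe0.
    have a'i : eid a' = i by move: qe0; rewrite Q => -[->|].
    have on sg : run sg n = run St n ->
        outcome sg n i = Some (RGood (eres a') (present None a' (tm n))).
      by move=> eq; apply: outcome_Some; rewrite eq (step_good_sole _ _ E Q) a'i.
    by left; rewrite (payoff_first v beforeT (on _ erefl)) (payoff_first v beforeS (on _ same)).
  by left; apply: (deviation_payoff_le (a := n) (estar := e0)).
have [z|p] := posnP (sinv (run St n)).
  apply: (survival_case (w := w) (e0 := e0)) => //; [exact: ltnW | exact: In_rcons_l |].
  by move=> x /In_rcons [qx xi|-> //]; [apply: run_uniq_i qx qe0 xi e0i].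
have eqs : step Ss None (run St n) n = step St None (run St n) n.
  by rewrite !(step_sale _ _ E p) Ss_St.
right; split; last first.
- right; split; first exact: ltnW.
  by rewrite /= (step_sale _ _ E p) /=; case: ifP => _ /=; split=> //; exists e0.
- by rewrite /= same eqs.
move=> m; rewrite ltnS leq_eqVlt => /orP[/eqP->|/before//].
have out : i \notin unzip1 (step St None (run St n) n).2.
  by rewrite (step_sale _ _ E p) /=; case: ifP => _ //=; rewrite inE eq_sym; apply/eqP.
by split; apply: outcome_None; rewrite ?same ?eqs.
Qed.

Lemma undecided_step n : undecided n -> payoff Ss i v <= payoff St i v \/ undecided n.+1.
Proof.
move=> und; case: (und) => _ _ [[le _]|[lt act]]; last exact: undecided_active lt act und.
have [ni|ni] := eqVneq n i; first by rewrite ni in und *; apply: undecided_arrival.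
by right; apply: undecided_absent und => //; apply/eqP.
Qed.

Theorem deviation_le : payoff Ss i v <= payoff St i v.
Proof.
have H n : payoff Ss i v <= payoff St i v \/ undecided n.
  elim: n => [|n [//|/undecided_step //]]; first by right; split=> //; left; split=> // e [].
  by left.
have [//|gt] := lerP (payoff Ss i v) (payoff St i v).
have none m : outcome St m i = None /\ outcome Ss m i = None.
  case: (H m.+1) => [le|[before _ _]]; last exact: before.
  by move: gt; rewrite ltNge le.
move: gt; rewrite (payoff_eq0 v (fun m => (none m).1)).
by rewrite (payoff_eq0 v (fun m => (none m).2)) ltxx.
Qed.

End Deviation.

End Play.

Unset Implicit Arguments.

Theorem theorem3 (R : realType) (K L : nat) (th : int -> R)
  (F f : R -> R) (v0 : R)
  (Hth : forall a b : int, - (L%:Z) <= a -> a < b -> b <= K%:Z ->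
           a != 0 -> b != 0 -> th a < th b)
  (Hth1 : forall a : int, - (L%:Z) <= a <= K%:Z -> a != 0 -> th a < 1)
  (Hv0 : 0 <= v0 <= 1) (HJ : v0 - (1 - F v0) / f v0 = 0)
  (ev : nat -> event R) (tm : nat -> R) (tb : nat -> nat -> nat)
  (Htm : forall n, tm n < tm n.+1)
  (Hval : forall n w, ev n = Buyer w -> 0 <= w <= 1)
  (sig : nat -> strategy R) (i : nat) (v : R) (Hi : ev i = Buyer v)
  (s : strategy R) :
  payoff (vhat th K v0) L ev tm tb (upd_strat sig i s) i v
  <= payoff (vhat th K v0) L ev tm tb (upd_strat sig i (truthful v)) i v.
Proof.
have /andP[v_ge0 _] := Hval i v Hi.
exact: deviation_le v_ge0 Hi.
Qed.
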